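(* Let $(\phi_n)_{n\ge1}$ be a sequence of inner functions satisfying $\phi_n(0) \neq 0$, and let $f_n = T(\phi_n)$. The following are equivalent: (a) the product $\prod_{n \geq 1} \phi_n(0)$ converges absolutely; (b) the product $\prod_{n \geq 1} \phi_n$ converges absolutely and locally uniformly on $\mathbb{D}$; (c) the product $\prod_{n \geq 1} f_n(0)$ converges absolutely; (d) the product $\prod_{n \geq 1} f_n$ converges absolutely and locally uniformly on $\mathbb{D}$.
   Context: $\mathbb{D}$ is the open unit disk. $T(z) = i\frac{1-iz}{1+iz}$, and $T(\phi)=T\circ\phi$ (it is implicitly assumed that no $\phi_n$ is the constant $i$, so that $f_n$ is defined). A product $\prod w_n$ of numbers converges absolutely if $\sum|1-w_n|<\infty$; a product of functions converges absolutely and locally uniformly on $\mathbb{D}$ if $\sum|1-w_n(z)|$ converges uniformly on compact subsets of $\mathbb{D}$. *)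

From Stdlib Require Import Reals.
From Coquelicot Require Import Coquelicot.

Open Scope R_scope.

Definition in_disk (z : C) : Prop := Cmod z < 1.

Definition holomorphic_on_disk (f : C -> C) : Prop :=
  forall z : C, in_disk z -> ex_derive (K := C_AbsRing) (V := C_NormedModule) f z.

Definition null_set (N : R -> Prop) : Prop :=
  forall eps : R, 0 < eps ->
    exists a b : nat -> R,
      (forall n, a n <= b n) /\
      (forall t, N t -> exists n, a n < t < b n) /\
      (forall m, sum_f_R0 (fun n => b n - a n) m <= eps).

Definition circ (t : R) : C := (cos t, sin t).

Definition unimodular_radial_limit (f : C -> C) (t : R) : Prop :=
  exists l : C, Cmod l = 1 /\
    filterlim (fun r : R => f (Cmult (RtoC r) (circ t))) (at_left 1) (locally l).

Definition inner (f : C -> C) : Prop :=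
  holomorphic_on_disk f /\
  (forall z, in_disk z -> Cmod (f z) <= 1) /\
  null_set (fun t => 0 <= t < 2 * PI /\ ~ unimodular_radial_limit f t).

Definition T (z : C) : C :=
  Cdiv (Cmult Ci (Cminus 1 (Cmult Ci z))) (Cplus 1 (Cmult Ci z)).

Definition prod_abs_conv (w : nat -> C) : Prop :=
  ex_series (fun n => Cmod (Cminus 1 (w n))).

(* Absolute and locally uniform convergence on D of a product of functions:
   sum |1 - w_n(z)| converges uniformly on compact subsets of D
   (equivalently, on every closed disk |z| <= r with r < 1). *)
Definition prod_abs_loc_unif_conv (w : nat -> C -> C) : Prop :=
  forall r : R, 0 <= r < 1 ->
    exists g : C -> R,
      forall eps : R, 0 < eps ->
        exists N0 : nat, forall N : nat, (N0 <= N)%nat ->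
          forall z : C, Cmod z <= r ->
            Rabs (sum_f_R0 (fun n => Cmod (Cminus 1 (w n z))) N - g z) < eps.

From Stdlib Require Import Reals Lra Lia ZArith.
From Coquelicot Require Import Coquelicot.
Open Scope R_scope.

(* The heart of the matter is a Harnack-type estimate for a holomorphic map
   [phi] of the disk into the closed disk:
     |1 - phi z| <= exp (2 / (1 - r)) |1 - phi 0|   for |z| <= r < 1.
   It is obtained by a Gronwall argument along the segment [0, z] from the
   pointwise bound |phi' w| (1 - |w|) <= 2 |1 - phi w|, which is Caratheodory's
   inequality for the nonnegative harmonic function Re (1 - phi).  That
   inequality is proved with the mean value property on circles, itself a
   consequence of Goursat's theorem for rectangles transported by the
   exponential map.  Given the estimate, the Weierstrass M-test yields
   (a) => (b) and (a) => (d); near 1 the map T satisfies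
   |1 - T w| <= 2 |1 - w| and |1 - w| <= 2 |1 - T w|, which yields (a) <=> (c);
   the remaining implications are evaluation at z = 0. *)

Notation is_Cderive f z l := (is_derive (K := C_AbsRing) (V := C_NormedModule) f z l).
Notation ex_Cderive f z := (ex_derive (K := C_AbsRing) (V := C_NormedModule) f z).

Lemma is_Cderive_eps (f : C -> C) z l :
  is_Cderive f z l ->
  forall eps, 0 < eps -> exists del, 0 < del /\ forall w, Cmod (w - z) < del ->
    Cmod (f w - f z - l * (w - z))%C <= eps * Cmod (w - z).
Proof.
  intros [_ Hd] eps Heps.
  assert (H := Hd z (fun P H => H) (mkposreal eps Heps)).
  apply (locally_le_locally_norm (K := C_AbsRing) (V := AbsRing_NormedModule C_AbsRing)) in H.
  destruct H as [d Hd']. exists d. split; [apply cond_pos|].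
  intros w Hw. rewrite (Cmult_comm l). exact (Hd' w Hw).
Qed.

Lemma eps_is_Cderive (f : C -> C) z l :
  (forall eps, 0 < eps -> exists del, 0 < del /\ forall w, Cmod (w - z) < del ->
    Cmod (f w - f z - l * (w - z))%C <= eps * Cmod (w - z)) ->
  is_Cderive f z l.
Proof.
  intros H. split; [apply is_linear_scal_l|].
  intros x Hx.
  apply (is_filter_lim_locally_unique (K := C_AbsRing) (V := AbsRing_NormedModule C_AbsRing)) in Hx.
  subst x. intros eps.
  apply (locally_le_locally_norm (K := C_AbsRing) (V := AbsRing_NormedModule C_AbsRing)).
  destruct (H eps (cond_pos eps)) as [d [Hd1 Hd2]].
  exists (mkposreal d Hd1). intros w Hw. rewrite <- (Cmult_comm l). exact (Hd2 w Hw).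
Qed.

(* Coquelicot's product and chain rules view [C] as a normed module over
   itself; its derivatives are those of [C_NormedModule]. *)
Lemma is_Cderive_abs (f : C -> C) z l :
  is_derive (K := C_AbsRing) (V := AbsRing_NormedModule C_AbsRing) f z l <-> is_Cderive f z l.
Proof.
  split; intros H; (split; [apply is_linear_scal_l|]);
    intros x Hx eps; exact (proj2 H x Hx eps).
Qed.

Lemma is_Cderive_eq (f : C -> C) (z l l' : C) : l' = l -> is_Cderive f z l' -> is_Cderive f z l.
Proof. intros ->. exact (fun H => H). Qed.

Lemma is_Cderive_plus f g z df dg :
  is_Cderive f z df -> is_Cderive g z dg -> is_Cderive (fun w => f w + g w)%C z (df + dg)%C.
Proof. exact (is_derive_plus f g z df dg). Qed.

Lemma is_Cderive_minus f g z df dg :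
  is_Cderive f z df -> is_Cderive g z dg -> is_Cderive (fun w => f w - g w)%C z (df - dg)%C.
Proof. exact (is_derive_minus f g z df dg). Qed.

Lemma is_Cderive_mult f g z df dg :
  is_Cderive f z df -> is_Cderive g z dg ->
  is_Cderive (fun w => f w * g w)%C z (df * g z + f z * dg)%C.
Proof.
  intros Hf%is_Cderive_abs Hg%is_Cderive_abs. apply is_Cderive_abs.
  apply (is_derive_mult f g z df dg Hf Hg). intros; apply Cmult_comm.
Qed.

Lemma is_Cderive_const (k : C) z : is_Cderive (fun _ => k) z (RtoC 0).
Proof. exact (is_derive_const (K := C_AbsRing) (V := C_NormedModule) k z). Qed.

Lemma is_Cderive_id z : is_Cderive (fun w => w) z (RtoC 1).
Proof. apply is_Cderive_abs, (is_derive_id (K := C_AbsRing) z). Qed.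

Lemma is_Cderive_comp f g z df dg :
  is_Cderive f (g z) df -> is_Cderive g z dg -> is_Cderive (fun x => f (g x)) z (dg * df)%C.
Proof. intros Hf Hg%is_Cderive_abs. exact (is_derive_comp f g z df dg Hf Hg). Qed.

Lemma is_Cderive_Cinv (v : C) : v <> 0%C -> is_Cderive Cinv v (- (/ v * / v))%C.
Proof.
  intros Hv. apply eps_is_Cderive. intros eps Heps.
  assert (Hm : 0 < Cmod v) by (apply Cmod_gt_0; auto).
  set (del := Rmin (Cmod v / 2) (eps * Cmod v ^ 3 / 2)).
  assert (Hdel : 0 < del).
  { apply Rmin_pos; [lra|]. apply Rdiv_lt_0_compat; [|lra].
    apply Rmult_lt_0_compat; [lra|apply pow_lt; lra]. }
  exists del. split; [exact Hdel|]. intros w Hw.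
  pose proof (Rmin_l (Cmod v / 2) (eps * Cmod v ^ 3 / 2)) as Hd1.
  pose proof (Rmin_r (Cmod v / 2) (eps * Cmod v ^ 3 / 2)) as Hd2. fold del in Hd1, Hd2.
  assert (Hwv : Cmod v / 2 <= Cmod w).
  { pose proof (Cmod_triangle w (v - w)) as Ht. replace (w + (v - w))%C with v in Ht by ring.
    replace (v - w)%C with (- (w - v))%C in Ht by ring. rewrite Cmod_opp in Ht. lra. }
  assert (Hw0 : w <> 0%C) by (intro E; rewrite E, Cmod_0 in Hwv; lra).
  replace (/ w - / v - - (/ v * / v) * (w - v))%C
    with ((w - v) * (w - v) * / w * / v * / v)%C by (field; auto).
  rewrite !Cmod_mult, !Cmod_inv by auto.
  pose proof (Cmod_ge_0 (w - v)).
  assert (Hiw : / Cmod w <= 2 / Cmod v).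
  { apply Rle_trans with (/ (Cmod v / 2)); [apply Rinv_le_contravar; lra|right; field; lra]. }
  assert (0 < / Cmod v) by (apply Rinv_0_lt_compat; auto).
  assert (Hw1 : 0 <= / Cmod w) by (left; apply Rinv_0_lt_compat; lra).
  assert (Hx : Cmod (w - v) * / Cmod w <= eps * Cmod v ^ 3 / 2 * (2 / Cmod v)).
  { apply Rmult_le_compat; lra. }
  replace (eps * Cmod (w - v)) with (Cmod (w - v) * (eps * Cmod v ^ 3 / 2 * (2 / Cmod v)) * / Cmod v * / Cmod v)
    by (field; lra).
  rewrite (Rmult_assoc (Cmod (w - v))).
  apply Rmult_le_compat_r; [lra|]. apply Rmult_le_compat_r; [lra|].
  apply Rmult_le_compat_l; lra.
Qed.

Lemma ex_Cderive_plus f g z : ex_Cderive f z -> ex_Cderive g z -> ex_Cderive (fun w => f w + g w)%C z.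
Proof. intros [a Ha] [b Hb]. eexists. apply is_Cderive_plus; eauto. Qed.

Lemma ex_Cderive_minus f g z : ex_Cderive f z -> ex_Cderive g z -> ex_Cderive (fun w => f w - g w)%C z.
Proof. intros [a Ha] [b Hb]. eexists. apply is_Cderive_minus; eauto. Qed.

Lemma ex_Cderive_mult f g z : ex_Cderive f z -> ex_Cderive g z -> ex_Cderive (fun w => f w * g w)%C z.
Proof. intros [a Ha] [b Hb]. eexists. apply is_Cderive_mult; eauto. Qed.

Lemma ex_Cderive_const (k : C) z : ex_Cderive (fun _ => k) z.
Proof. eexists. apply is_Cderive_const. Qed.

Lemma ex_Cderive_id z : ex_Cderive (fun w => w) z.
Proof. eexists. apply is_Cderive_id. Qed.

Lemma ex_Cderive_Cinv (z : C) : z <> 0%C -> ex_Cderive Cinv z.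
Proof. intros H. eexists. apply is_Cderive_Cinv, H. Qed.

Lemma ex_Cderive_continuous_eps (f : C -> C) z :
  ex_Cderive f z ->
  forall eps, 0 < eps -> exists del, 0 < del /\ forall w, Cmod (w - z) < del -> Cmod (f w - f z) < eps.
Proof.
  intros [l Hl] eps Heps. destruct (is_Cderive_eps f z l Hl 1 Rlt_0_1) as [d [Hd1 Hd2]].
  pose proof (Cmod_ge_0 l).
  exists (Rmin d (eps / (Cmod l + 2))). split.
  { apply Rmin_pos; auto. apply Rdiv_lt_0_compat; lra. }
  intros w Hw.
  pose proof (Rmin_l d (eps / (Cmod l + 2))). pose proof (Rmin_r d (eps / (Cmod l + 2))).
  specialize (Hd2 w ltac:(lra)).
  replace (f w - f z)%C with ((f w - f z - l * (w - z)) + l * (w - z))%C by ring.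
  eapply Rle_lt_trans; [apply Cmod_triangle|]. rewrite Cmod_mult.
  pose proof (Cmod_ge_0 (w - z)).
  assert (Cmod (w - z) * (Cmod l + 2) < eps).
  { apply Rlt_le_trans with (eps / (Cmod l + 2) * (Cmod l + 2)).
    - apply Rmult_lt_compat_r; lra.
    - right. field. lra. }
  nra.
Qed.

Lemma Ci_sqr : (Ci * Ci)%C = RtoC (-1).
Proof. unfold Ci, Cmult, RtoC; simpl. f_equal; ring. Qed.

Lemma Cmult_Ci_eq_0 X : (Ci * X)%C = 0%C -> X = 0%C.
Proof.
  intros H. replace X with (- Ci * (Ci * X))%C.
  - rewrite H. ring.
  - replace (- Ci * (Ci * X))%C with (- (Ci * Ci) * X)%C by ring. rewrite Ci_sqr. ring.
Qed.

Lemma im_le_Cmod (h : C) : Rabs (Im h) <= Cmod h.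
Proof. pose proof (Rmax_Cmod h). pose proof (Rmax_r (Rabs (fst h)) (Rabs (snd h))). unfold Im. lra. Qed.

Lemma Cmod_le_Rabs_sum a b : Cmod (a, b) <= Rabs a + Rabs b.
Proof.
  pose proof (Rabs_pos a); pose proof (Rabs_pos b).
  unfold Cmod; simpl. rewrite <- (sqrt_Rsqr (Rabs a + Rabs b)) by lra.
  apply sqrt_le_1_alt. pose proof (Rsqr_abs a); pose proof (Rsqr_abs b). unfold Rsqr in *. nra.
Qed.

Lemma exp_le_3_of_le_1 c : c <= 1 -> exp c <= 3.
Proof.
  intros H. pose proof exp_le_3. destruct (Rle_lt_or_eq_dec _ _ H) as [Hc| ->]; [|lra].
  pose proof (exp_increasing _ _ Hc). lra.
Qed.

Lemma Rabs_sub_le_mvt (f f' : R -> R) a M :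
  (forall c, derivable_pt_lim f c (f' c)) ->
  (forall c, Rabs c <= Rabs a -> Rabs (f' c) <= M) ->
  Rabs (f a - f 0) <= M * Rabs a.
Proof.
  intros Hd Hb. destruct (MVT_abs f f' 0 a) as [x [E Hx]]; [intros; apply Hd|]. rewrite E.
  rewrite Rminus_0_r. apply Rmult_le_compat_r; [apply Rabs_pos|]. apply Hb.
  unfold Rmin, Rmax in Hx. destruct (Rle_dec 0 a).
  - rewrite !Rabs_pos_eq; lra.
  - rewrite !Rabs_left1; lra.
Qed.

Lemma Rabs_sqr b : b ^ 2 = Rabs b * Rabs b.
Proof. rewrite <- Rabs_mult, Rabs_pos_eq; nra. Qed.

Lemma Rabs_sin_le b : Rabs (sin b) <= Rabs b.
Proof.
  replace (sin b) with (sin b - sin 0) by (rewrite sin_0; ring).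
  rewrite <- (Rmult_1_l (Rabs b)).
  apply (Rabs_sub_le_mvt sin cos); [intros; apply derivable_pt_lim_sin|].
  intros c _. apply Rabs_le, COS_bound.
Qed.

Lemma Rabs_cos_sub_1_le b : Rabs (cos b - 1) <= b ^ 2.
Proof.
  replace (cos b - 1) with (cos b - cos 0) by (rewrite cos_0; ring). rewrite Rabs_sqr.
  apply (Rabs_sub_le_mvt cos (fun x => - sin x)); [intros; apply derivable_pt_lim_cos|].
  intros c Hc. rewrite Rabs_Ropp. eapply Rle_trans; [apply Rabs_sin_le|exact Hc].
Qed.

Lemma Rabs_sin_sub_le b : Rabs b <= 1 -> Rabs (sin b - b) <= b ^ 2.
Proof.
  intros Hb. replace (sin b - b) with ((sin b - b) - (sin 0 - 0)) by (rewrite sin_0; ring).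
  rewrite Rabs_sqr.
  apply (Rabs_sub_le_mvt (fun x => sin x - x) (fun x => cos x - 1)).
  - intros c. apply derivable_pt_lim_minus; [apply derivable_pt_lim_sin|apply derivable_pt_lim_id].
  - intros c Hc. eapply Rle_trans; [apply Rabs_cos_sub_1_le|].
    rewrite Rabs_sqr. pose proof (Rabs_pos c). nra.
Qed.

Lemma Rabs_exp_sub_1_le a : Rabs a <= 1 -> Rabs (exp a - 1) <= 3 * Rabs a.
Proof.
  intros Ha. replace (exp a - 1) with (exp a - exp 0) by (rewrite exp_0; ring).
  apply (Rabs_sub_le_mvt exp exp); [intros; apply derivable_pt_lim_exp|].
  intros c Hc. rewrite Rabs_pos_eq by (left; apply exp_pos).
  apply exp_le_3_of_le_1. pose proof (Rle_abs c). lra.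
Qed.

Lemma Rabs_exp_sub_1_sub_le a : Rabs a <= 1 -> Rabs (exp a - 1 - a) <= 3 * a ^ 2.
Proof.
  intros Ha. replace (exp a - 1 - a) with ((exp a - 1 - a) - (exp 0 - 1 - 0)) by (rewrite exp_0; ring).
  rewrite Rabs_sqr, <- Rmult_assoc.
  apply (Rabs_sub_le_mvt (fun x => exp x - 1 - x) (fun x => exp x - 0 - 1)).
  - intros c. repeat apply derivable_pt_lim_minus.
    + apply derivable_pt_lim_exp.
    + apply derivable_pt_lim_const.
    + apply derivable_pt_lim_id.
  - intros c Hc. rewrite Rminus_0_r. eapply Rle_trans; [apply Rabs_exp_sub_1_le; lra|lra].
Qed.

Definition Cexp (z : C) : C := (exp (fst z) * cos (snd z), exp (fst z) * sin (snd z)).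

Lemma Cexp_plus z h : Cexp (z + h)%C = (Cexp z * Cexp h)%C.
Proof.
  destruct z as [x y], h as [a b]. unfold Cexp; simpl.
  rewrite exp_plus, cos_plus, sin_plus. unfold Cmult; simpl. f_equal; ring.
Qed.

Lemma Cmod_Cexp z : Cmod (Cexp z) = exp (fst z).
Proof.
  unfold Cexp, Cmod; simpl. set (e := exp (fst z)).
  replace (e * cos (snd z) * (e * cos (snd z) * 1) + e * sin (snd z) * (e * sin (snd z) * 1))
    with (e * e * (Rsqr (sin (snd z)) + Rsqr (cos (snd z)))) by (unfold Rsqr; ring).
  rewrite sin2_cos2, Rmult_1_r. apply sqrt_square. left; apply exp_pos.
Qed.

Lemma Cexp_sub_1_sub_le h : Cmod h <= 1 -> Cmod (Cexp h - 1 - h)%C <= 6 * Cmod h ^ 2.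
Proof.
  intros Hh. destruct h as [a b].
  pose proof (re_le_Cmod (a, b)) as Ha; pose proof (im_le_Cmod (a, b)) as Hb.
  unfold Re, Im in Ha, Hb; simpl in Ha, Hb. rewrite Cmod2_alt; unfold Re, Im; simpl.
  replace (Cexp (a, b) - 1 - (a, b))%C
    with ((exp a - 1 - a) + exp a * (cos b - 1), (exp a - 1) * sin b + (sin b - b))
    by (unfold Cexp, Cminus, Cplus, Copp; simpl; f_equal; ring).
  eapply Rle_trans; [apply Cmod_le_Rabs_sum|].
  eapply Rle_trans; [apply Rplus_le_compat; apply Rabs_triang|].
  rewrite !Rabs_mult, (Rabs_pos_eq (exp a)) by (left; apply exp_pos).
  pose proof (Rabs_exp_sub_1_sub_le a ltac:(lra)).
  pose proof (Rabs_exp_sub_1_le a ltac:(lra)).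
  pose proof (Rabs_cos_sub_1_le b).
  pose proof (Rabs_sin_sub_le b ltac:(lra)).
  pose proof (Rabs_sin_le b).
  assert (exp a <= 3) by (apply exp_le_3_of_le_1; pose proof (Rle_abs a); lra).
  pose proof (exp_pos a). pose proof (Rabs_pos (cos b - 1)). pose proof (Rabs_pos (exp a - 1)).
  pose proof (Rabs_pos (sin b)). pose proof (Rabs_pos a); pose proof (Rabs_pos b).
  rewrite !Rabs_sqr in *.
  assert (Rabs (exp a - 1) * Rabs (sin b) <= 3 * Rabs a * Rabs b) by (apply Rmult_le_compat; lra).
  assert (exp a * Rabs (cos b - 1) <= 3 * (Rabs b * Rabs b)) by (apply Rmult_le_compat; lra).
  assert (2 * Rabs a * Rabs b <= Rabs a * Rabs a + Rabs b * Rabs b)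
    by (pose proof (pow2_ge_0 (Rabs a - Rabs b)); nra).
  replace (a * (a * 1) + b * (b * 1)) with (Rabs a * Rabs a + Rabs b * Rabs b) by (rewrite <- !Rabs_sqr; ring). nra.
Qed.

Lemma is_Cderive_Cexp z : is_Cderive Cexp z (Cexp z).
Proof.
  apply eps_is_Cderive. intros eps Heps.
  set (M := exp (fst z)). assert (HM : 0 < M) by apply exp_pos.
  exists (Rmin 1 (eps / (6 * M))). split.
  { apply Rmin_pos; [lra|]. apply Rdiv_lt_0_compat; lra. }
  intros w Hw. set (h := (w - z)%C) in *.
  replace w with (z + h)%C by (unfold h; ring). rewrite Cexp_plus.
  replace (Cexp z * Cexp h - Cexp z - Cexp z * h)%C with (Cexp z * (Cexp h - 1 - h))%C by ring.
  rewrite Cmod_mult, Cmod_Cexp. fold M.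
  pose proof (Rmin_l 1 (eps / (6 * M))). pose proof (Rmin_r 1 (eps / (6 * M))).
  pose proof (Cexp_sub_1_sub_le h ltac:(lra)). pose proof (Cmod_ge_0 h).
  assert (6 * M * Cmod h <= eps).
  { apply Rle_trans with (6 * M * (eps / (6 * M))).
    - apply Rmult_le_compat_l; lra.
    - right. field. lra. }
  assert (M * Cmod (Cexp h - 1 - h) <= M * (6 * Cmod h ^ 2)) by (apply Rmult_le_compat_l; lra).
  nra.
Qed.

Notation CR := C_R_CompleteNormedModule.

Lemma eps_is_derive_R_C (g : R -> C) t0 l :
  (forall eps, 0 < eps -> exists del, 0 < del /\ forall t, Rabs (t - t0) < del ->
    Cmod (g t - g t0 - RtoC (t - t0) * l)%C <= eps * Rabs (t - t0)) ->
  is_derive (K := R_AbsRing) (V := C_R_NormedModule) g t0 l.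
Proof.
  intros H. split; [apply is_linear_scal_l|].
  intros x Hx. apply (is_filter_lim_locally_unique (K := R_AbsRing) (V := R_NormedModule)) in Hx.
  subst x. intros eps. apply (locally_le_locally_norm (K := R_AbsRing) (V := R_NormedModule)).
  destruct (H eps (cond_pos eps)) as [d [Hd1 Hd2]].
  exists (mkposreal d Hd1). intros w Hw.
  pose proof (Hd2 w Hw) as K. rewrite <- scal_R_Cmult, Cmod_norm in K. exact K.
Qed.

Lemma is_derive_line (G : C -> C) p z t l : is_Cderive G (p + RtoC t * z)%C l ->
  is_derive (K := R_AbsRing) (V := C_R_NormedModule) (fun s : R => G (p + RtoC s * z)%C) t (z * l)%C.
Proof.
  intros H. apply eps_is_derive_R_C. intros eps Heps.
  destruct (is_Cderive_eps G _ l H (eps / (Cmod z + 1))) as [d [Hd1 Hd2]].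
  { apply Rdiv_lt_0_compat; [lra|]. pose proof (Cmod_ge_0 z). lra. }
  pose proof (Cmod_ge_0 z).
  exists (d / (Cmod z + 1)). split; [apply Rdiv_lt_0_compat; lra|]. intros s Hs.
  assert (E : (p + RtoC s * z - (p + RtoC t * z))%C = (RtoC (s - t) * z)%C)
    by (rewrite RtoC_minus; ring).
  specialize (Hd2 (p + RtoC s * z)%C). rewrite E, Cmod_mult, Cmod_R in Hd2.
  pose proof (Rabs_pos (s - t)).
  replace (RtoC (s - t) * (z * l))%C with (l * (RtoC (s - t) * z))%C by ring.
  eapply Rle_trans; [apply Hd2|].
  - apply Rle_lt_trans with (Rabs (s - t) * (Cmod z + 1)); [nra|].
    apply Rlt_le_trans with (d / (Cmod z + 1) * (Cmod z + 1)); [apply Rmult_lt_compat_r; lra|].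
    right. field. lra.
  - apply Rle_trans with (eps / (Cmod z + 1) * (Rabs (s - t) * (Cmod z + 1))); [|right; field; lra].
    apply Rmult_le_compat_l; [apply Rlt_le, Rdiv_lt_0_compat; lra|nra].
Qed.

Lemma is_derive_horizontal (G : C -> C) x y l : is_Cderive G (x, y) l ->
  is_derive (K := R_AbsRing) (V := C_R_NormedModule) (fun t : R => G (t, y)) x l.
Proof.
  intros H. replace l with (RtoC 1 * l)%C by ring.
  assert (E : forall t, (t, y) = ((0, y) + RtoC t * RtoC 1)%C)
    by (intros t; unfold Cplus, Cmult, RtoC; simpl; f_equal; ring).
  apply (is_derive_ext (fun s => G ((0, y) + RtoC s * RtoC 1)%C)); [intros t; rewrite <- E; reflexivity|].
  apply is_derive_line. rewrite <- E. exact H.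
Qed.

Lemma is_derive_vertical (G : C -> C) x y l : is_Cderive G (x, y) l ->
  is_derive (K := R_AbsRing) (V := C_R_NormedModule) (fun t : R => G (x, t)) y (Ci * l)%C.
Proof.
  intros H.
  assert (E : forall t, (x, t) = ((x, 0) + RtoC t * Ci)%C)
    by (intros t; unfold Cplus, Cmult, RtoC, Ci; simpl; f_equal; ring).
  apply (is_derive_ext (fun s => G ((x, 0) + RtoC s * Ci)%C)); [intros t; rewrite <- E; reflexivity|].
  apply is_derive_line. rewrite <- E. exact H.
Qed.

Lemma continuous_horizontal (G : C -> C) x y : ex_Cderive G (x, y) ->
  continuous (T := R_UniformSpace) (U := CR) (fun t : R => G (t, y)) x.
Proof.
  intros [l Hl]. exact (ex_derive_continuous (K := R_AbsRing) (V := C_R_NormedModule) _ _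
    (ex_intro _ l (is_derive_horizontal G x y l Hl))).
Qed.

Lemma continuous_vertical (G : C -> C) x y : ex_Cderive G (x, y) ->
  continuous (T := R_UniformSpace) (U := CR) (fun t : R => G (x, t)) y.
Proof.
  intros [l Hl]. exact (ex_derive_continuous (K := R_AbsRing) (V := C_R_NormedModule) _ _
    (ex_intro _ _ (is_derive_vertical G x y l Hl))).
Qed.

(** * Goursat's theorem for rectangles *)

Definition Cderivable_on_rect (G : C -> C) a b c d :=
  forall x y, a <= x <= b -> c <= y <= d -> ex_Cderive G (x, y).

Definition hint (G : C -> C) (a b y : R) : C := RInt (V := CR) (fun x => G (x, y)) a b.
Definition vint (G : C -> C) (x c d : R) : C := RInt (V := CR) (fun y => G (x, y)) c d.

(* The integral of [G dz] along the boundary of [a, b] x [c, d], counterclockwise. *)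
Definition boundary_integral (G : C -> C) a b c d : C :=
  (hint G a b c + Ci * vint G b c d - hint G a b d - Ci * vint G a c d)%C.

Section Rectangle.

Variables (G : C -> C) (a b c d : R).
Hypotheses (Hab : a <= b) (Hcd : c <= d) (HG : Cderivable_on_rect G a b c d).

Lemma ex_RInt_horizontal y : c <= y <= d -> ex_RInt (V := CR) (fun x => G (x, y)) a b.
Proof.
  intros Hy. apply ex_RInt_continuous. intros x Hx.
  rewrite Rmin_left, Rmax_right in Hx by lra. apply continuous_horizontal, HG; lra.
Qed.

Lemma ex_RInt_vertical x : a <= x <= b -> ex_RInt (V := CR) (fun y => G (x, y)) c d.
Proof.
  intros Hx. apply ex_RInt_continuous. intros y Hy.
  rewrite Rmin_left, Rmax_right in Hy by lra. apply continuous_vertical, HG; lra.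
Qed.

Lemma norm_boundary_integral_le M :
  (forall x y, a <= x <= b -> c <= y <= d -> Cmod (G (x, y)) <= M) ->
  Cmod (boundary_integral G a b c d) <= 2 * ((b - a) + (d - c)) * M.
Proof.
  intros HM.
  assert (Bh : forall y, c <= y <= d -> Cmod (hint G a b y) <= (b - a) * M).
  { intros y Hy. rewrite Cmod_norm.
    apply (norm_RInt_le_const (V := C_R_NormedModule) (fun x => G (x, y))); auto.
    - intros x Hx. rewrite <- Cmod_norm. apply HM; lra.
    - apply (RInt_correct (V := CR)), ex_RInt_horizontal, Hy. }
  assert (Bv : forall x, a <= x <= b -> Cmod (Ci * vint G x c d) <= (d - c) * M).
  { intros x Hx. rewrite Cmod_mult, Cmod_Ci, Rmult_1_l, Cmod_norm.
    apply (norm_RInt_le_const (V := C_R_NormedModule) (fun y => G (x, y))); auto.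
    - intros y Hy. rewrite <- Cmod_norm. apply HM; lra.
    - apply (RInt_correct (V := CR)), ex_RInt_vertical, Hx. }
  pose proof (Bh c ltac:(lra)). pose proof (Bh d ltac:(lra)).
  pose proof (Bv a ltac:(lra)). pose proof (Bv b ltac:(lra)).
  unfold boundary_integral, Cminus.
  pose proof (Cmod_triangle (hint G a b c + Ci * vint G b c d + - hint G a b d) (- (Ci * vint G a c d))).
  pose proof (Cmod_triangle (hint G a b c + Ci * vint G b c d) (- hint G a b d)).
  pose proof (Cmod_triangle (hint G a b c) (Ci * vint G b c d)).
  rewrite !Cmod_opp in *. lra.
Qed.

End Rectangle.

Lemma boundary_integral_split G a m b c n d :
  Cderivable_on_rect G a b c d -> a <= m <= b -> c <= n <= d ->
  boundary_integral G a b c d =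
  (boundary_integral G a m c n + boundary_integral G m b c n +
   boundary_integral G a m n d + boundary_integral G m b n d)%C.
Proof.
  intros HG Hm Hn.
  assert (HGs : forall a' b' c' d', a <= a' -> b' <= b -> c <= c' -> d' <= d ->
    Cderivable_on_rect G a' b' c' d') by (intros ? ? ? ? ? ? ? ? x y ? ?; apply HG; lra).
  assert (Hh : forall y, c <= y <= d -> hint G a b y = (hint G a m y + hint G m b y)%C).
  { intros y Hy. symmetry. apply (RInt_Chasles (V := CR)).
    - apply (ex_RInt_horizontal G a m y d); [lra|apply HGs; lra|lra].
    - apply (ex_RInt_horizontal G m b y d); [lra|apply HGs; lra|lra]. }
  assert (Hv : forall x, a <= x <= b -> vint G x c d = (vint G x c n + vint G x n d)%C).
  { intros x Hx. symmetry. apply (RInt_Chasles (V := CR)).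
    - apply (ex_RInt_vertical G a b c n); [lra|apply HGs; lra|lra].
    - apply (ex_RInt_vertical G a b n d); [lra|apply HGs; lra|lra]. }
  unfold boundary_integral. rewrite (Hh c), (Hh d), (Hv a), (Hv b) by lra. ring.
Qed.

Lemma boundary_integral_minus G1 G2 a b c d : a <= b -> c <= d ->
  Cderivable_on_rect G1 a b c d -> Cderivable_on_rect G2 a b c d ->
  boundary_integral (fun z => G1 z - G2 z)%C a b c d =
  (boundary_integral G1 a b c d - boundary_integral G2 a b c d)%C.
Proof.
  intros Hab Hcd H1 H2. unfold boundary_integral, hint, vint.
  rewrite !(RInt_minus (V := CR) (fun x => G1 (x, _)) (fun x => G2 (x, _)))
    by (apply (ex_RInt_horizontal _ a b c d); auto; lra).
  rewrite !(RInt_minus (V := CR) (fun y => G1 (_, y)) (fun y => G2 (_, y)))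
    by (apply (ex_RInt_vertical _ a b c d); auto; lra).
  change (@minus CR) with Cminus. ring.
Qed.

Lemma boundary_integral_derive G P a b c d : a <= b -> c <= d ->
  (forall x y, a <= x <= b -> c <= y <= d -> is_Cderive P (x, y) (G (x, y))) ->
  Cderivable_on_rect G a b c d -> boundary_integral G a b c d = 0%C.
Proof.
  intros Hab Hcd HP HG.
  assert (Eh : forall y, c <= y <= d -> hint G a b y = (P (b, y) - P (a, y))%C).
  { intros y Hy. apply (is_RInt_unique (V := CR)).
    apply (is_RInt_derive (V := CR) (fun t => P (t, y))); intros t Ht;
      rewrite Rmin_left, Rmax_right in Ht by lra.
    - apply is_derive_horizontal, HP; lra.
    - apply continuous_horizontal, HG; lra. }
  assert (Ev : forall x, a <= x <= b -> (Ci * vint G x c d)%C = (P (x, d) - P (x, c))%C).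
  { intros x Hx. unfold vint.
    rewrite (is_RInt_unique (V := CR) _ _ _ (- Ci * P (x, d) - - Ci * P (x, c))%C).
    { replace (P (x, d) - P (x, c))%C with (- (Ci * Ci) * (P (x, d) - P (x, c)))%C
        by (rewrite Ci_sqr; ring). ring. }
    apply (is_RInt_derive (V := CR) (fun t => (- Ci * P (x, t))%C)); intros t Ht;
      rewrite Rmin_left, Rmax_right in Ht by lra.
    - replace (G (x, t)) with (Ci * (- Ci * G (x, t)))%C
        by (replace (Ci * (- Ci * G (x, t)))%C with (- (Ci * Ci) * G (x, t))%C by ring;
            rewrite Ci_sqr; ring).
      apply (is_derive_vertical (fun z => (- Ci * P z)%C) x t).
      replace (- Ci * G (x, t))%C with (0 * P (x, t) + - Ci * G (x, t))%C by ring.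
      apply (is_Cderive_mult (fun _ => (- Ci)%C) P); [apply is_Cderive_const|apply HP; lra].
    - apply continuous_vertical, HG; lra. }
  unfold boundary_integral. rewrite (Eh c), (Eh d), (Ev a), (Ev b) by lra. ring.
Qed.

Lemma boundary_integral_affine al be p a b c d : a <= b -> c <= d ->
  boundary_integral (fun w => al + be * (w - p))%C a b c d = 0%C.
Proof.
  intros Hab Hcd.
  assert (Hd : forall w, is_Cderive (fun w => al + be * (w - p))%C w be).
  { intros w. apply (is_Cderive_eq _ _ _ (0 + (0 * (w - p) + be * (1 - 0)))%C); [ring|].
    apply is_Cderive_plus; [apply is_Cderive_const|].
    apply (is_Cderive_mult (fun _ => be) (fun w => w - p)%C); [apply is_Cderive_const|].
    apply is_Cderive_minus; [apply is_Cderive_id|apply is_Cderive_const]. }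
  apply (boundary_integral_derive _ (fun w => al * w + be * (w - p) * (w - p) * / 2)%C); auto.
  - intros x y _ _. set (z := (x, y)).
    apply (is_Cderive_eq _ _ _ ((0 * z + al * 1) + (((0 * (z - p) + be * (1 - 0)) * (z - p)
            + be * (z - p) * (1 - 0)) * / 2 + be * (z - p) * (z - p) * 0))%C).
    { field. }
    apply is_Cderive_plus.
    + apply (is_Cderive_mult (fun _ => al) (fun w => w)); [apply is_Cderive_const|apply is_Cderive_id].
    + apply (is_Cderive_mult (fun w => be * (w - p) * (w - p))%C (fun _ => / 2)%C);
        [|apply is_Cderive_const].
      apply (is_Cderive_mult (fun w => be * (w - p))%C (fun w => w - p)%C);
        [|apply is_Cderive_minus; [apply is_Cderive_id|apply is_Cderive_const]].
      apply (is_Cderive_mult (fun _ => be) (fun w => w - p)%C); [apply is_Cderive_const|].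
      apply is_Cderive_minus; [apply is_Cderive_id|apply is_Cderive_const].
  - intros x y _ _. eexists. apply Hd.
Qed.

Lemma pow2_unbounded x : exists n, x < 2 ^ n.
Proof.
  assert (Hn : forall n, INR n <= 2 ^ n).
  { induction n as [|n IH]; [simpl; lra|]. rewrite S_INR. simpl.
    pose proof (pow_R1_Rle 2 n ltac:(lra)). lra. }
  destruct (archimed x) as [Hx _].
  destruct (Z.lt_ge_cases (up x) 0) as [Hneg|Hpos].
  - exists 0%nat. apply IZR_lt in Hneg. simpl. lra.
  - exists (Z.to_nat (up x)). specialize (Hn (Z.to_nat (up x))).
    rewrite INR_IZR_INZ, Z2Nat.id in Hn by lia. lra.
Qed.

Lemma nested_intervals (u v : nat -> R) :
  Un_growing u -> Un_decreasing v -> (forall n, u n <= v n) ->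
  exists p, forall n, u n <= p <= v n.
Proof.
  intros Hu Hv Huv.
  assert (Hub : forall m n, u m <= v n).
  { intros m n. destruct (Nat.le_ge_cases m n) as [Hmn|Hmn].
    - pose proof (tech9 u Hu m n Hmn). pose proof (Huv n). lra.
    - pose proof (decreasing_prop v n m Hv Hmn). pose proof (Huv m). lra. }
  destruct (completeness (fun x => exists n, x = u n)) as [p [Hp1 Hp2]].
  - exists (v 0%nat). intros x [n ->]. apply Hub.
  - exists (u 0%nat), 0%nat. reflexivity.
  - exists p. intros n. split.
    + apply Hp1. exists n. reflexivity.
    + apply Hp2. intros x [m ->]. apply Hub.
Qed.

Record rect := Rect { rx0 : R; rx1 : R; ry0 : R; ry1 : R }.

Definition rect_integral G r := boundary_integral G (rx0 r) (rx1 r) (ry0 r) (ry1 r).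

Definition rect_width r := (rx1 r - rx0 r) + (ry1 r - ry0 r).

Definition rect_sub r' r :=
  rx0 r <= rx0 r' /\ rx1 r' <= rx1 r /\ ry0 r <= ry0 r' /\ ry1 r' <= ry1 r.

Definition rect_valid r := rx0 r <= rx1 r /\ ry0 r <= ry1 r.

Definition quarter (i j : bool) r :=
  let mx := (rx0 r + rx1 r) / 2 in let my := (ry0 r + ry1 r) / 2 in
  Rect (if i then mx else rx0 r) (if i then rx1 r else mx)
       (if j then my else ry0 r) (if j then ry1 r else my).

Lemma quarter_props i j r : rect_valid r ->
  rect_valid (quarter i j r) /\ rect_sub (quarter i j r) r /\
  rx1 (quarter i j r) - rx0 (quarter i j r) = (rx1 r - rx0 r) / 2 /\
  ry1 (quarter i j r) - ry0 (quarter i j r) = (ry1 r - ry0 r) / 2.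
Proof.
  unfold rect_valid, rect_sub. intros H.
  destruct i, j; simpl; repeat split; lra.
Qed.

Definition larger (f : rect -> R) r s := if Rle_dec (f r) (f s) then s else r.

Definition worst_quarter G r :=
  let f r := Cmod (rect_integral G r) in
  larger f (larger f (quarter false false r) (quarter true false r))
           (larger f (quarter false true r) (quarter true true r)).

Lemma worst_quarter_is_quarter G r : exists i j, worst_quarter G r = quarter i j r.
Proof.
  unfold worst_quarter, larger.
  repeat match goal with |- context [Rle_dec ?a ?b] => destruct (Rle_dec a b) end;
    eauto.
Qed.

Lemma rect_integral_le_worst_quarter G r : rect_valid r ->
  Cderivable_on_rect G (rx0 r) (rx1 r) (ry0 r) (ry1 r) ->
  Cmod (rect_integral G r) <= 4 * Cmod (rect_integral G (worst_quarter G r)).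
Proof.
  intros Hr HG. unfold rect_valid in Hr.
  unfold rect_integral at 1.
  rewrite (boundary_integral_split G _ ((rx0 r + rx1 r) / 2) _ _ ((ry0 r + ry1 r) / 2)) by (auto; lra).
  set (f := fun r => Cmod (rect_integral G r)).
  change (Cmod (rect_integral G (worst_quarter G r)))
    with (f (worst_quarter G r)).
  assert (Hlarger : forall s t, f s <= f (larger f s t) /\ f t <= f (larger f s t)).
  { intros s t. unfold larger. destruct (Rle_dec (f s) (f t)); lra. }
  unfold worst_quarter; fold f.
  destruct (Hlarger (quarter false false r) (quarter true false r)).
  destruct (Hlarger (quarter false true r) (quarter true true r)).
  destruct (Hlarger (larger f (quarter false false r) (quarter true false r))
                    (larger f (quarter false true r) (quarter true true r))).
  eapply Rle_trans; [apply Cmod_triangle|].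
  eapply Rle_trans; [apply Rplus_le_compat_r, Cmod_triangle|].
  eapply Rle_trans; [apply Rplus_le_compat_r, Rplus_le_compat_r, Cmod_triangle|].
  set (mx := (rx0 r + rx1 r) / 2). set (my := (ry0 r + ry1 r) / 2).
  change (Cmod (boundary_integral G (rx0 r) mx (ry0 r) my)) with (f (quarter false false r)).
  change (Cmod (boundary_integral G mx (rx1 r) (ry0 r) my)) with (f (quarter true false r)).
  change (Cmod (boundary_integral G (rx0 r) mx my (ry1 r))) with (f (quarter false true r)).
  change (Cmod (boundary_integral G mx (rx1 r) my (ry1 r))) with (f (quarter true true r)).
  lra.
Qed.

Lemma worst_quarter_props G r : rect_valid r ->
  rect_valid (worst_quarter G r) /\ rect_sub (worst_quarter G r) r /\
  rect_width (worst_quarter G r) = rect_width r / 2.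
Proof.
  intros Hr. destruct (worst_quarter_is_quarter G r) as (i & j & ->).
  destruct (quarter_props i j r Hr) as (H1 & H2 & H3 & H4).
  unfold rect_width. rewrite H3, H4. split; [exact H1|split; [exact H2|lra]].
Qed.

Fixpoint bisect G r n := match n with O => r | S n => worst_quarter G (bisect G r n) end.

Lemma rect_sub_trans r1 r2 r3 : rect_sub r1 r2 -> rect_sub r2 r3 -> rect_sub r1 r3.
Proof. unfold rect_sub. lra. Qed.

Lemma bisect_props G r : rect_valid r ->
  Cderivable_on_rect G (rx0 r) (rx1 r) (ry0 r) (ry1 r) -> forall n,
  rect_valid (bisect G r n) /\ rect_sub (bisect G r n) r /\
  rect_width (bisect G r n) = rect_width r / 2 ^ n /\
  Cmod (rect_integral G r) <= 2 ^ n * 2 ^ n * Cmod (rect_integral G (bisect G r n)).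
Proof.
  intros Hr HG. induction n as [|n (IH1 & IH2 & IH3 & IH4)].
  - simpl. unfold rect_sub, rect_valid in *. repeat split; lra.
  - simpl bisect. destruct (worst_quarter_props G _ IH1) as (H1 & H2 & H3).
    assert (HGn : Cderivable_on_rect G (rx0 (bisect G r n)) (rx1 (bisect G r n))
                    (ry0 (bisect G r n)) (ry1 (bisect G r n))).
    { intros x y Hx Hy. unfold rect_sub in IH2. apply HG; lra. }
    pose proof (rect_integral_le_worst_quarter G _ IH1 HGn).
    pose proof (pow_lt 2 n ltac:(lra)).
    split; [exact H1|]. split; [exact (rect_sub_trans _ _ _ H2 IH2)|]. split.
    + rewrite H3, IH3. simpl. field. lra.
    + simpl. nra.
Qed.

Lemma Cmod_sub_le_rect_width r x y x' y' :
  rx0 r <= x <= rx1 r -> ry0 r <= y <= ry1 r ->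
  rx0 r <= x' <= rx1 r -> ry0 r <= y' <= ry1 r ->
  Cmod ((x, y) - (x', y'))%C <= rect_width r.
Proof.
  intros. replace ((x, y) - (x', y'))%C with (x - x', y - y')
    by (unfold Cminus, Cplus, Copp; simpl; f_equal; ring).
  eapply Rle_trans; [apply Cmod_le_Rabs_sum|]. unfold rect_width.
  apply Rplus_le_compat; apply Rabs_le; lra.
Qed.

Lemma rect_integral_le_remainder G r p l M : rect_valid r ->
  Cderivable_on_rect G (rx0 r) (rx1 r) (ry0 r) (ry1 r) ->
  (forall x y, rx0 r <= x <= rx1 r -> ry0 r <= y <= ry1 r ->
     Cmod (G (x, y) - G p - l * ((x, y) - p))%C <= M) ->
  Cmod (rect_integral G r) <= 2 * rect_width r * M.
Proof.
  intros [Hx Hy] HG HM. set (A := fun w => (G p + l * (w - p))%C).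
  assert (HA : Cderivable_on_rect A (rx0 r) (rx1 r) (ry0 r) (ry1 r)).
  { intros x y _ _. eexists. unfold A.
    apply is_Cderive_plus; [apply is_Cderive_const|].
    apply (is_Cderive_mult (fun _ => l) (fun w => w - p)%C); [apply is_Cderive_const|].
    apply is_Cderive_minus; [apply is_Cderive_id|apply is_Cderive_const]. }
  assert (E : rect_integral G r = boundary_integral (fun w => G w - A w)%C (rx0 r) (rx1 r) (ry0 r) (ry1 r)).
  { rewrite boundary_integral_minus by auto. unfold A.
    rewrite boundary_integral_affine by auto. unfold rect_integral. ring. }
  rewrite E. apply norm_boundary_integral_le; auto.
  - intros x y Hx' Hy'.
    destruct (HG x y Hx' Hy') as [l1 L1]. destruct (HA x y Hx' Hy') as [l2 L2].
    eexists. apply is_Cderive_minus; eauto.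
  - intros x y Hx' Hy'. unfold A.
    replace (G (x, y) - (G p + l * ((x, y) - p)))%C with (G (x, y) - G p - l * ((x, y) - p))%C by ring.
    apply HM; auto.
Qed.

Lemma bisect_common_point G r : rect_valid r ->
  Cderivable_on_rect G (rx0 r) (rx1 r) (ry0 r) (ry1 r) ->
  exists px py, forall n, rx0 (bisect G r n) <= px <= rx1 (bisect G r n) /\
                          ry0 (bisect G r n) <= py <= ry1 (bisect G r n).
Proof.
  intros Hr HG. pose proof (bisect_props G r Hr HG) as BP.
  assert (Hstep : forall n, rect_sub (bisect G r (S n)) (bisect G r n))
    by (intros n; apply worst_quarter_props, BP).
  destruct (nested_intervals (fun n => rx0 (bisect G r n)) (fun n => rx1 (bisect G r n))) as [px Hpx];
    [intros n; apply Hstep|intros n; apply Hstep|intros n; apply BP|].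
  destruct (nested_intervals (fun n => ry0 (bisect G r n)) (fun n => ry1 (bisect G r n))) as [py Hpy];
    [intros n; apply Hstep|intros n; apply Hstep|intros n; apply BP|].
  exists px, py. intros n. split; [apply Hpx|apply Hpy].
Qed.

Lemma Cmod_eq_0_of_le_eps (x : C) M : (forall eps, 0 < eps -> Cmod x <= eps * M) -> x = 0%C.
Proof.
  intros H. apply Cmod_eq_0, Rle_antisym; [|apply Cmod_ge_0].
  apply Rle_plus_epsilon. intros eps Heps. rewrite Rplus_0_l.
  pose proof (Rabs_pos M). pose proof (Rle_abs M).
  assert (He : 0 < eps / (Rabs M + 1)) by (apply Rdiv_lt_0_compat; lra).
  eapply Rle_trans; [apply (H _ He)|].
  apply Rle_trans with (eps / (Rabs M + 1) * (Rabs M + 1)); [nra|]. right. field. lra.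
Qed.

Theorem goursat G a b c d : a <= b -> c <= d -> Cderivable_on_rect G a b c d ->
  boundary_integral G a b c d = 0%C.
Proof.
  intros Hab Hcd HG.
  set (r0 := Rect a b c d). assert (Hr0 : rect_valid r0) by (split; simpl; lra).
  destruct (bisect_common_point G r0 Hr0 HG) as (px & py & Hp).
  destruct (HG px py ltac:(apply (Hp 0%nat)) ltac:(apply (Hp 0%nat))) as [l Hl].
  set (W := rect_width r0).
  apply (Cmod_eq_0_of_le_eps _ (2 * W ^ 2)). intros eps Heps.
  destruct (is_Cderive_eps G (px, py) l Hl eps Heps) as [del [Hdel Hrem]].
  destruct (pow2_unbounded (W / del)) as [n Hn].
  destruct (bisect_props G r0 Hr0 HG n) as (Hv & Hsub & Hw & Hle). fold W in Hw.
  set (rn := bisect G r0 n) in *.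
  assert (P2 : 0 < 2 ^ n) by (apply pow_lt; lra).
  assert (Hsmall : W / 2 ^ n < del).
  { apply (Rmult_lt_reg_r (2 ^ n)); [lra|].
    replace (W / 2 ^ n * 2 ^ n) with W by (field; lra).
    apply (Rmult_lt_compat_l del) in Hn; [|lra]. replace (del * (W / del)) with W in Hn by (field; lra).
    lra. }
  assert (Hn' : Cmod (rect_integral G rn) <= 2 * (W / 2 ^ n) * (eps * (W / 2 ^ n))).
  { rewrite <- Hw. apply (rect_integral_le_remainder G rn (px, py) l); auto.
    - intros x y Hx Hy. unfold rect_sub in Hsub. apply HG; simpl in Hsub; lra.
    - intros x y Hx Hy. rewrite Hw.
      assert (Hd : Cmod ((x, y) - (px, py))%C <= W / 2 ^ n)
        by (rewrite <- Hw; apply Cmod_sub_le_rect_width; auto; apply (Hp n)).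
      eapply Rle_trans; [apply Hrem; lra|]. apply Rmult_le_compat_l; lra. }
  eapply Rle_trans; [exact Hle|].
  apply Rle_trans with (2 ^ n * 2 ^ n * (2 * (W / 2 ^ n) * (eps * (W / 2 ^ n)))).
  - apply Rmult_le_compat_l; [nra|exact Hn'].
  - right. field. lra.
Qed.

(** * Mean values on circles *)

Definition polar (rho t : R) : C := (rho * cos t, rho * sin t).

Definition circle_integral (F : C -> C) (rho : R) : C :=
  RInt (V := CR) (fun t => F (polar rho t)) 0 (2 * PI).

Lemma Cmod_polar rho t : 0 <= rho -> Cmod (polar rho t) = rho.
Proof.
  intros H. unfold polar, Cmod; simpl.
  replace (rho * cos t * (rho * cos t * 1) + rho * sin t * (rho * sin t * 1))
    with (rho * rho * (Rsqr (sin t) + Rsqr (cos t))) by (unfold Rsqr; ring).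
  rewrite sin2_cos2, Rmult_1_r. apply sqrt_square, H.
Qed.

Lemma Cexp_ln_polar rho t : 0 < rho -> Cexp (ln rho, t) = polar rho t.
Proof. intros H. unfold Cexp, polar; simpl. rewrite exp_ln by exact H. reflexivity. Qed.

Lemma ex_Cderive_comp_Cexp F z : ex_Cderive F (Cexp z) -> ex_Cderive (fun z => F (Cexp z)) z.
Proof. intros [l Hl]. eexists. apply is_Cderive_comp; [exact Hl|apply is_Cderive_Cexp]. Qed.

(* Through [Cexp], circles become vertical segments: this is how Goursat's
   theorem for rectangles yields the mean value property. *)
Lemma circle_integral_vint F rho : 0 < rho ->
  circle_integral F rho = vint (fun z => F (Cexp z)) (ln rho) 0 (2 * PI).
Proof.
  intros H. apply (RInt_ext (V := CR)). intros t _. rewrite Cexp_ln_polar by exact H. reflexivity.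
Qed.

Lemma ex_RInt_circle F rho : 0 < rho -> (forall t, ex_Cderive F (polar rho t)) ->
  ex_RInt (V := CR) (fun t => F (polar rho t)) 0 (2 * PI).
Proof.
  intros Hr HF. apply (ex_RInt_ext (V := CR) (fun t => F (Cexp (ln rho, t)))).
  { intros t _. rewrite Cexp_ln_polar by exact Hr. reflexivity. }
  apply (ex_RInt_vertical (fun z => F (Cexp z)) (ln rho) (ln rho) 0 (2 * PI));
    [pose proof PI_RGT_0; lra| |lra].
  intros x y Hx _. replace x with (ln rho) by lra.
  apply ex_Cderive_comp_Cexp. rewrite Cexp_ln_polar by exact Hr. apply HF.
Qed.

Lemma circle_integral_radius_invariant F rho1 rho2 :
  (forall w, 0 < Cmod w < 1 -> ex_Cderive F w) -> 0 < rho1 <= rho2 -> rho2 < 1 ->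
  circle_integral F rho1 = circle_integral F rho2.
Proof.
  intros HF Hr1 Hr2. rewrite !circle_integral_vint by lra.
  set (G := fun z => F (Cexp z)).
  assert (Hln : ln rho1 <= ln rho2 < 0).
  { split; [apply ln_le; lra|]. rewrite <- ln_1. apply ln_increasing; lra. }
  assert (HG : Cderivable_on_rect G (ln rho1) (ln rho2) 0 (2 * PI)).
  { intros x y Hx _. apply ex_Cderive_comp_Cexp, HF. rewrite Cmod_Cexp. simpl.
    split; [apply exp_pos|]. rewrite <- exp_0. apply exp_increasing. lra. }
  pose proof (goursat G (ln rho1) (ln rho2) 0 (2 * PI) ltac:(lra) ltac:(pose proof PI_RGT_0; lra) HG) as E.
  assert (Hper : hint G (ln rho1) (ln rho2) 0 = hint G (ln rho1) (ln rho2) (2 * PI)).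
  { apply (RInt_ext (V := CR)). intros x _. unfold G, Cexp; simpl.
    rewrite cos_2PI, sin_2PI, cos_0, sin_0. reflexivity. }
  unfold boundary_integral in E. rewrite Hper in E.
  set (V1 := vint G (ln rho1) 0 (2 * PI)) in *. set (V2 := vint G (ln rho2) 0 (2 * PI)) in *.
  set (h := hint G (ln rho1) (ln rho2) (2 * PI)) in *.
  assert (E' : (Ci * (V2 - V1))%C = 0%C) by (rewrite <- E; ring).
  apply Cmult_Ci_eq_0 in E'.
  transitivity (V1 + (V2 - V1))%C; [rewrite E'; ring|ring].
Qed.

Definition punctured_limit (F : C -> C) (L : C) :=
  forall eps, 0 < eps -> exists del, 0 < del /\ forall w, 0 < Cmod w < del -> Cmod (F w - L) < eps.

Lemma punctured_limit_plus F1 F2 L1 L2 :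
  punctured_limit F1 L1 -> punctured_limit F2 L2 ->
  punctured_limit (fun w => F1 w + F2 w)%C (L1 + L2)%C.
Proof.
  intros H1 H2 eps Heps.
  destruct (H1 (eps / 2) ltac:(lra)) as [d1 [Hd1 Hw1]].
  destruct (H2 (eps / 2) ltac:(lra)) as [d2 [Hd2 Hw2]].
  exists (Rmin d1 d2). split; [apply Rmin_pos; lra|]. intros w Hw.
  pose proof (Rmin_l d1 d2). pose proof (Rmin_r d1 d2).
  replace (F1 w + F2 w - (L1 + L2))%C with ((F1 w - L1) + (F2 w - L2))%C by ring.
  eapply Rle_lt_trans; [apply Cmod_triangle|].
  pose proof (Hw1 w ltac:(lra)). pose proof (Hw2 w ltac:(lra)). lra.
Qed.

Lemma punctured_limit_scal (k : C) F L :
  punctured_limit F L -> punctured_limit (fun w => k * F w)%C (k * L)%C.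
Proof.
  intros H eps Heps. pose proof (Cmod_ge_0 k).
  destruct (H (eps / (Cmod k + 1))) as [d [Hd Hw]]; [apply Rdiv_lt_0_compat; lra|].
  exists d. split; [exact Hd|]. intros w Hwd.
  replace (k * F w - k * L)%C with (k * (F w - L))%C by ring. rewrite Cmod_mult.
  pose proof (Hw w Hwd). pose proof (Cmod_ge_0 (F w - L)).
  apply Rle_lt_trans with ((Cmod k + 1) * Cmod (F w - L)); [nra|].
  apply Rlt_le_trans with ((Cmod k + 1) * (eps / (Cmod k + 1))).
  - apply Rmult_lt_compat_l; lra.
  - right. field. lra.
Qed.

Lemma punctured_limit_continuous F : ex_Cderive F (RtoC 0) -> punctured_limit F (F (RtoC 0)).
Proof.
  intros HF eps Heps. destruct (ex_Cderive_continuous_eps F _ HF eps Heps) as [d [Hd Hw]].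
  exists d. split; [exact Hd|]. intros w [_ Hwd]. apply Hw. replace (w - RtoC 0)%C with w by ring. exact Hwd.
Qed.

Lemma punctured_limit_difference_quotient F d : is_Cderive F (RtoC 0) d ->
  punctured_limit (fun w => (F w - F (RtoC 0)) / w)%C d.
Proof.
  intros HF eps Heps. destruct (is_Cderive_eps F _ d HF (eps / 2) ltac:(lra)) as [del [Hdel Hw]].
  exists del. split; [exact Hdel|]. intros w [Hw0 Hwd].
  specialize (Hw w). replace (w - RtoC 0)%C with w in Hw by ring. specialize (Hw Hwd).
  assert (Hnz : w <> 0%C) by (intros E; rewrite E, Cmod_0 in Hw0; lra).
  replace ((F w - F (RtoC 0)) / w - d)%C with ((F w - F (RtoC 0) - d * w) / w)%C by (field; exact Hnz).
  unfold Cdiv. rewrite Cmod_mult, Cmod_inv by exact Hnz.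
  apply Rle_lt_trans with (eps / 2 * Cmod w * / Cmod w).
  - apply Rmult_le_compat_r; [left; apply Rinv_0_lt_compat; lra|exact Hw].
  - field_simplify; lra.
Qed.

Lemma circle_integral_sub_le F rho L M :
  ex_RInt (V := CR) (fun t => F (polar rho t)) 0 (2 * PI) ->
  (forall t, Cmod (F (polar rho t) - L) <= M) ->
  Cmod (circle_integral F rho - 2 * PI * L) <= 2 * PI * M.
Proof.
  intros Hex HM. pose proof PI_RGT_0.
  replace (2 * PI * L)%C with (RInt (V := CR) (fun _ => L) 0 (2 * PI))
    by (rewrite RInt_const, scal_R_Cmult, Rminus_0_r, RtoC_mult; reflexivity).
  unfold circle_integral. change Cminus with (@minus CR).
  rewrite <- RInt_minus by (auto; apply ex_RInt_const).
  rewrite Cmod_norm. replace (2 * PI * M) with ((2 * PI - 0) * M) by ring.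
  apply (norm_RInt_le_const (V := C_R_NormedModule) (fun t => minus (F (polar rho t)) L)); [lra| |].
  - intros t _. rewrite <- Cmod_norm. apply HM.
  - apply (RInt_correct (V := CR)), (ex_RInt_minus (V := CR)); [exact Hex|apply ex_RInt_const].
Qed.

Lemma circle_integral_removable F L :
  (forall w, 0 < Cmod w < 1 -> ex_Cderive F w) -> punctured_limit F L ->
  forall rho, 0 < rho < 1 -> circle_integral F rho = (2 * PI * L)%C.
Proof.
  intros HF HL rho Hrho. pose proof PI_RGT_0.
  transitivity ((circle_integral F rho - 2 * PI * L) + 2 * PI * L)%C; [ring|].
  rewrite (Cmod_eq_0_of_le_eps (circle_integral F rho - 2 * PI * L) (2 * PI)); [ring|]. intros eps Heps.
  destruct (HL eps Heps) as [del [Hdel HLdel]].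
  set (m := Rmin rho del / 2).
  assert (Hm : 0 < m < rho /\ m < del).
  { unfold m. pose proof (Rmin_l rho del). pose proof (Rmin_r rho del).
    pose proof (Rmin_pos rho del ltac:(lra) Hdel). lra. }
  rewrite <- (circle_integral_radius_invariant F m rho) by (auto; lra).
  rewrite Rmult_comm. apply circle_integral_sub_le.
  - apply ex_RInt_circle; [lra|]. intros t. apply HF. rewrite Cmod_polar; lra.
  - intros t. left. apply HLdel. rewrite Cmod_polar; lra.
Qed.

Lemma circle_integral_holomorphic F :
  (forall w, Cmod w < 1 -> ex_Cderive F w) ->
  forall rho, 0 < rho < 1 -> circle_integral F rho = (2 * PI * F (RtoC 0))%C.
Proof.
  intros HF. apply circle_integral_removable.
  - intros w Hw. apply HF. lra.
  - apply punctured_limit_continuous, HF. rewrite Cmod_0. lra.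
Qed.

Lemma trig_RInt a b : is_RInt (fun t => a * cos t + b * sin t) 0 (2 * PI) 0.
Proof.
  replace 0 with (minus (a * sin (2 * PI) - b * cos (2 * PI)) (a * sin 0 - b * cos 0)) at 2
    by (rewrite sin_2PI, cos_2PI, sin_0, cos_0; unfold minus, plus, opp; simpl; ring).
  apply (is_RInt_derive (fun t => a * sin t - b * cos t)); intros x _.
  - apply is_derive_Reals.
    replace (a * cos x + b * sin x) with (a * cos x - b * (- sin x)) by ring.
    apply derivable_pt_lim_minus; apply derivable_pt_lim_scal;
      [apply derivable_pt_lim_sin|apply derivable_pt_lim_cos].
  - apply (continuous_plus (fun t => a * cos t) (fun t => b * sin t));
      [apply (continuous_scal_r a cos)|apply (continuous_scal_r b sin)];
      apply ex_derive_continuous; eexists; apply is_derive_Reals;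
      [apply derivable_pt_lim_cos|apply derivable_pt_lim_sin].
Qed.

Lemma circle_integral_Cinv (K : C) rho : 0 < rho ->
  circle_integral (fun v => K * / v)%C rho = RtoC 0.
Proof.
  intros Hr. destruct K as [k1 k2]. apply (is_RInt_unique (V := CR)).
  apply (is_RInt_fct_extend_pair (U := R_NormedModule) (V := R_NormedModule)).
  - apply (is_RInt_ext (fun t => k1 / rho * cos t + k2 / rho * sin t)); [|apply trig_RInt].
    intros t _. unfold polar, Cinv, Cmult; simpl.
    replace (rho * cos t * (rho * cos t * 1) + rho * sin t * (rho * sin t * 1))
      with (rho * rho * (Rsqr (sin t) + Rsqr (cos t))) by (unfold Rsqr; ring).
    rewrite sin2_cos2. field. lra.
  - apply (is_RInt_ext (fun t => k2 / rho * cos t + - k1 / rho * sin t)); [|apply trig_RInt].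
    intros t _. unfold polar, Cinv, Cmult; simpl.
    replace (rho * cos t * (rho * cos t * 1) + rho * sin t * (rho * sin t * 1))
      with (rho * rho * (Rsqr (sin t) + Rsqr (cos t))) by (unfold Rsqr; ring).
    rewrite sin2_cos2. field. lra.
Qed.

(** * Derivative bounds for self-maps of the disk *)

Lemma ex_RInt_Re (h : R -> C) a b : ex_RInt (V := CR) h a b -> ex_RInt (fun t => Re (h t)) a b.
Proof.
  intros [l H]. exists (fst l).
  exact (is_RInt_fct_extend_fst (U := R_NormedModule) (V := R_NormedModule) h a b l H).
Qed.

Lemma Re_RInt (h : R -> C) a b : ex_RInt (V := CR) h a b ->
  Re (RInt (V := CR) h a b) = RInt (fun t => Re (h t)) a b.
Proof.
  intros H. symmetry. apply is_RInt_unique.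
  apply (is_RInt_fct_extend_fst (U := R_NormedModule) (V := R_NormedModule)).
  apply (RInt_correct (V := CR)), H.
Qed.

Lemma polar_conj_sum (w : C) rho t : 0 < rho ->
  (Cconj w * RtoC rho * / polar rho t + w * polar rho t * / RtoC rho)%C =
  RtoC (2 * Re (w * circ t)).
Proof.
  intros Hr. destruct w as [w1 w2].
  unfold polar, circ, Cinv, Cmult, Cplus, Cconj, RtoC, Re; simpl.
  replace (rho * cos t * (rho * cos t * 1) + rho * sin t * (rho * sin t * 1))
    with (rho * rho * (Rsqr (sin t) + Rsqr (cos t))) by (unfold Rsqr; ring).
  rewrite sin2_cos2. pose proof (sin2_cos2 t) as E. unfold Rsqr in E.
  f_equal; field_simplify; try lra.
  all: replace (sin t ^ 2) with (1 - cos t ^ 2) by nra; field; lra.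
Qed.

Lemma Cmod_circ t : Cmod (circ t) = 1.
Proof. rewrite <- (Cmod_polar 1 t) by lra. unfold polar, circ. f_equal; f_equal; ring. Qed.

Section DerivativeAtZero.

Variables (psi : C -> C) (d : C).
Hypotheses (Hholo : forall v, Cmod v < 1 -> ex_Cderive psi v)
           (Hbound : forall v, Cmod v < 1 -> Cmod (psi v) <= 1)
           (Hd : is_Cderive psi (RtoC 0) d).

Let c := psi (RtoC 0).

Lemma Re_one_sub_nonneg v : Cmod v < 1 -> 0 <= Re (1 - psi v).
Proof.
  intros Hv. pose proof (re_le_Cmod (psi v)). pose proof (Hbound v Hv).
  pose proof (Rle_abs (Re (psi v))). unfold Re in *. simpl. lra.
Qed.

Lemma ex_Cderive_scal_one_sub (k : C) v : Cmod v < 1 -> ex_Cderive (fun v => k * (1 - psi v))%C v.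
Proof.
  intros Hv. apply (ex_Cderive_mult (fun _ => k) (fun v => 1 - psi v)%C); [apply ex_Cderive_const|].
  apply (ex_Cderive_minus (fun _ => RtoC 1) psi); [apply ex_Cderive_const|apply Hholo, Hv].
Qed.

Let diff_quot v := ((psi v - c) / v)%C.
Let mul_one_sub v := (v * (1 - psi v))%C.

(* The circle integral of H v := (1 - psi v) (conj d rho / v + d v / rho) is
   -2 pi rho |d|^2 (split H into its pole [K rho / v] and the part [Q rho],
   removable at 0), while Re H >= -2 |d| Re (1 - psi v) on |v| = rho. *)
Let K rho := (Cconj d * RtoC rho * (1 - c))%C.
Let Q rho v := (- (Cconj d * RtoC rho) * diff_quot v + d * / RtoC rho * mul_one_sub v)%C.

Lemma ex_Cderive_mul_one_sub v : Cmod v < 1 -> ex_Cderive mul_one_sub v.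
Proof.
  intros Hv. apply (ex_Cderive_mult (fun v => v) (fun v => 1 - psi v)%C); [apply ex_Cderive_id|].
  apply (ex_Cderive_minus (fun _ => RtoC 1) psi); [apply ex_Cderive_const|apply Hholo, Hv].
Qed.

Lemma ex_Cderive_diff_quot v : 0 < Cmod v < 1 -> ex_Cderive diff_quot v.
Proof.
  intros Hv. assert (Hnz : v <> RtoC 0) by (intros E; rewrite E, Cmod_0 in Hv; lra).
  apply (ex_Cderive_mult (fun v => psi v - c)%C Cinv); [|apply ex_Cderive_Cinv, Hnz].
  apply (ex_Cderive_minus psi (fun _ => c)); [apply Hholo; lra|apply ex_Cderive_const].
Qed.

Lemma ex_Cderive_Q rho v : 0 < Cmod v < 1 -> ex_Cderive (Q rho) v.
Proof.
  intros Hv. apply (ex_Cderive_plus (fun v => - (Cconj d * RtoC rho) * diff_quot v)%C (fun v => d * / RtoC rho * mul_one_sub v)%C).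
  - apply (ex_Cderive_mult (fun _ => - (Cconj d * RtoC rho))%C diff_quot);
      [apply ex_Cderive_const|apply ex_Cderive_diff_quot, Hv].
  - apply (ex_Cderive_mult (fun _ => d * / RtoC rho)%C mul_one_sub);
      [apply ex_Cderive_const|apply ex_Cderive_mul_one_sub; lra].
Qed.

Lemma punctured_limit_Q rho : punctured_limit (Q rho) (- (Cconj d * RtoC rho) * d)%C.
Proof.
  replace (- (Cconj d * RtoC rho) * d)%C with (- (Cconj d * RtoC rho) * d + d * / RtoC rho * mul_one_sub (RtoC 0))%C
    by (unfold mul_one_sub; ring).
  apply (punctured_limit_plus (fun v => - (Cconj d * RtoC rho) * diff_quot v)%C (fun v => d * / RtoC rho * mul_one_sub v)%C).
  - apply punctured_limit_scal, punctured_limit_difference_quotient, Hd.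
  - apply punctured_limit_scal, punctured_limit_continuous, ex_Cderive_mul_one_sub. rewrite Cmod_0. lra.
Qed.

Lemma circle_integral_pole_part rho : 0 < rho < 1 ->
  circle_integral (fun v => K rho * / v + Q rho v)%C rho = (2 * PI * (- (Cconj d * RtoC rho) * d))%C.
Proof.
  intros Hr. unfold circle_integral.
  assert (Hcirc : forall t, 0 < Cmod (polar rho t) < 1) by (intros t; rewrite Cmod_polar; lra).
  rewrite (RInt_plus (V := CR) (fun t => K rho * / polar rho t)%C (fun t => Q rho (polar rho t))).
  - change (RInt (V := CR) (fun t => K rho * / polar rho t)%C 0 (2 * PI))
      with (circle_integral (fun v => K rho * / v)%C rho).
    change (RInt (V := CR) (fun t => Q rho (polar rho t)) 0 (2 * PI)) with (circle_integral (Q rho) rho).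
    rewrite circle_integral_Cinv by lra.
    rewrite (circle_integral_removable _ _ (ex_Cderive_Q rho) (punctured_limit_Q rho)) by lra.
    change (@plus CR) with Cplus. ring.
  - apply (ex_RInt_circle (fun v => K rho * / v)%C); [lra|]. intros t.
    apply (ex_Cderive_mult (fun _ => K rho) Cinv); [apply ex_Cderive_const|].
    apply ex_Cderive_Cinv. intros E. specialize (Hcirc t). rewrite E, Cmod_0 in Hcirc. lra.
  - apply (ex_RInt_circle (Q rho)); [lra|]. intros t. apply ex_Cderive_Q, Hcirc.
Qed.

Lemma Re_pole_part_ge rho t : 0 < rho < 1 ->
  Re (RtoC (- 2 * Cmod d) * (1 - psi (polar rho t))) <=
  Re (K rho * / polar rho t + Q rho (polar rho t)).
Proof.
  intros Hr. set (v := polar rho t).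
  assert (Hv : Cmod v = rho) by (apply Cmod_polar; lra).
  assert (Hnz : v <> RtoC 0) by (intros E; rewrite E, Cmod_0 in Hv; lra).
  assert (E : (K rho * / v + Q rho v)%C = ((1 - psi v) * RtoC (2 * Re (d * circ t)))%C).
  { rewrite <- (polar_conj_sum d rho t) by lra. fold v. unfold K, Q, diff_quot, mul_one_sub, c.
    field. split; [intros E; injection E; lra|exact Hnz]. }
  rewrite E, re_scal_r, re_scal_l.
  assert (Hre : Rabs (Re (d * circ t)) <= Cmod d).
  { eapply Rle_trans; [apply re_le_Cmod|]. rewrite Cmod_mult, Cmod_circ. lra. }
  pose proof (Re_one_sub_nonneg v ltac:(lra)).
  apply Rabs_le_between in Hre. nra.
Qed.

Lemma derive_at_0_sqr_le rho : 0 < rho < 1 -> rho * Cmod d ^ 2 <= 2 * Cmod d * Re (1 - c).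
Proof.
  intros Hr. pose proof PI_RGT_0.
  assert (Hcirc : forall t, Cmod (polar rho t) < 1) by (intros t; rewrite Cmod_polar; lra).
  assert (Hmean : circle_integral (fun v => RtoC (- 2 * Cmod d) * (1 - psi v))%C rho =
                  (2 * PI * (RtoC (- 2 * Cmod d) * (1 - c)))%C).
  { apply (circle_integral_holomorphic (fun v => RtoC (- 2 * Cmod d) * (1 - psi v))%C); [|lra].
    intros w. apply ex_Cderive_scal_one_sub. }
  assert (Hex1 : ex_RInt (V := CR) (fun t => RtoC (- 2 * Cmod d) * (1 - psi (polar rho t)))%C 0 (2 * PI)).
  { apply (ex_RInt_circle (fun v => RtoC (- 2 * Cmod d) * (1 - psi v))%C); [lra|].
    intros t. apply ex_Cderive_scal_one_sub, Hcirc. }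
  assert (Hex2 : ex_RInt (V := CR) (fun t => K rho * / polar rho t + Q rho (polar rho t))%C 0 (2 * PI)).
  { apply (ex_RInt_circle (fun v => K rho * / v + Q rho v)%C); [lra|]. intros t.
    assert (Hp : 0 < Cmod (polar rho t) < 1) by (rewrite Cmod_polar; lra).
    apply (ex_Cderive_plus (fun v => K rho * / v)%C (Q rho)); [|apply ex_Cderive_Q, Hp].
    apply (ex_Cderive_mult (fun _ => K rho) Cinv); [apply ex_Cderive_const|].
    apply ex_Cderive_Cinv. intros E. rewrite E, Cmod_0 in Hp. lra. }
  pose proof (RInt_le _ _ 0 (2 * PI) ltac:(lra) (ex_RInt_Re _ _ _ Hex1) (ex_RInt_Re _ _ _ Hex2)
                (fun t _ => Re_pole_part_ge rho t Hr)) as Hle.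
  rewrite <- !Re_RInt in Hle by assumption.
  change (Re (circle_integral (fun v => RtoC (- 2 * Cmod d) * (1 - psi v))%C rho) <=
          Re (circle_integral (fun v => K rho * / v + Q rho v)%C rho)) in Hle.
  rewrite Hmean, circle_integral_pole_part in Hle by lra.
  assert (Hl : Re (2 * PI * (RtoC (- 2 * Cmod d) * (1 - c)))%C = 2 * PI * (- 2 * Cmod d) * Re (1 - c)).
  { unfold Re, Cmult, Cminus, Cplus, Copp, RtoC; simpl. ring. }
  assert (Hr' : Re (2 * PI * (- (Cconj d * RtoC rho) * d))%C = - (2 * PI * rho * Cmod d ^ 2)).
  { rewrite Cmod2_alt. destruct d as [d1 d2]. unfold Re, Im, Cmult, Cconj, Copp, RtoC; simpl. ring. }
  rewrite Hl, Hr' in Hle. pose proof (Cmod_ge_0 d).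
  apply (Rmult_le_reg_l (2 * PI)); [lra|]. lra.
Qed.

End DerivativeAtZero.

Lemma le_of_forall_scal_lt_1 x M : 0 <= x -> (forall rho, 0 < rho < 1 -> rho * x <= M) -> x <= M.
Proof.
  intros Hx H. apply Rle_plus_epsilon. intros eps Heps.
  destruct (Req_dec x 0) as [-> | Hx0]; [specialize (H (1 / 2)); lra|].
  set (rho := x / (x + eps)).
  assert (E : rho * (x + eps) = x) by (unfold rho; field; lra).
  assert (Hrho : 0 < rho < 1) by (split; nra).
  specialize (H rho Hrho). nra.
Qed.

Lemma Cmod_derive_at_0_le psi d :
  (forall v, Cmod v < 1 -> ex_Cderive psi v) -> (forall v, Cmod v < 1 -> Cmod (psi v) <= 1) ->
  is_Cderive psi (RtoC 0) d -> Cmod d <= 2 * Cmod (1 - psi (RtoC 0)).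
Proof.
  intros Hholo Hbound Hd. pose proof (Cmod_ge_0 d).
  assert (Hre : Re (1 - psi (RtoC 0)) <= Cmod (1 - psi (RtoC 0))).
  { pose proof (re_le_Cmod (1 - psi (RtoC 0))). pose proof (Rle_abs (Re (1 - psi (RtoC 0)))). lra. }
  destruct (Req_dec (Cmod d) 0) as [Z|NZ]; [pose proof (Cmod_ge_0 (1 - psi (RtoC 0))); lra|].
  apply le_of_forall_scal_lt_1; [lra|]. intros rho Hr.
  pose proof (derive_at_0_sqr_le psi d Hholo Hbound Hd rho Hr).
  apply (Rmult_le_reg_r (Cmod d)); [lra|]. nra.
Qed.

(* Precomposing with [v |-> w + (1 - |w|) v] moves the estimate at 0 to [w]. *)
Lemma Cmod_derive_le phi w l :
  (forall v, Cmod v < 1 -> ex_Cderive phi v) -> (forall v, Cmod v < 1 -> Cmod (phi v) <= 1) ->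
  Cmod w < 1 -> is_Cderive phi w l -> Cmod l * (1 - Cmod w) <= 2 * Cmod (1 - phi w).
Proof.
  intros Hholo Hbound Hw Hl.
  set (s := 1 - Cmod w). assert (Hs : 0 < s) by (unfold s; lra).
  set (g := fun v => (w + RtoC s * v)%C).
  assert (Hg : forall v, Cmod v < 1 -> Cmod (g v) < 1).
  { intros v Hv. unfold g. eapply Rle_lt_trans; [apply Cmod_triangle|].
    rewrite Cmod_mult, Cmod_R, Rabs_pos_eq by lra. pose proof (Cmod_ge_0 v). unfold s. nra. }
  assert (Hgd : forall v, is_Cderive g v (RtoC s)).
  { intros v. apply (is_Cderive_eq _ _ _ (0 + (0 * v + RtoC s * 1))%C); [ring|].
    apply is_Cderive_plus; [apply is_Cderive_const|].
    apply (is_Cderive_mult (fun _ => RtoC s) (fun v => v)); [apply is_Cderive_const|apply is_Cderive_id]. }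
  assert (Hg0 : g (RtoC 0) = w) by (unfold g; ring).
  pose proof (Cmod_derive_at_0_le (fun v => phi (g v)) (RtoC s * l)%C) as Hbd.
  simpl in Hbd. rewrite Hg0, Cmod_mult, Cmod_R, Rabs_pos_eq in Hbd by lra.
  rewrite Rmult_comm. apply Hbd.
  - intros v Hv. destruct (Hholo (g v) (Hg v Hv)) as [lf Hlf].
    eexists. apply (is_Cderive_comp phi g); [exact Hlf|apply Hgd].
  - intros v Hv. apply Hbound, Hg, Hv.
  - apply (is_Cderive_comp phi g); [rewrite Hg0; exact Hl|apply Hgd].
Qed.

(** * A Harnack inequality *)

Lemma is_derive_Re_curve (g : R -> C) t l :
  is_derive (K := R_AbsRing) (V := C_R_NormedModule) g t l -> is_derive (fun s => Re (g s)) t (Re l).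
Proof.
  intros H. eapply filterdiff_ext_lin.
  - apply (filterdiff_comp g fst _ fst H).
    apply (filterdiff_linear (K := R_AbsRing) (U := prod_NormedModule R_AbsRing R_NormedModule R_NormedModule)).
    apply is_linear_fst.
  - reflexivity.
Qed.

Lemma is_derive_Im_curve (g : R -> C) t l :
  is_derive (K := R_AbsRing) (V := C_R_NormedModule) g t l -> is_derive (fun s => Im (g s)) t (Im l).
Proof.
  intros H. eapply filterdiff_ext_lin.
  - apply (filterdiff_comp g snd _ snd H).
    apply (filterdiff_linear (K := R_AbsRing) (U := prod_NormedModule R_AbsRing R_NormedModule R_NormedModule)).
    apply is_linear_snd.
  - reflexivity.
Qed.

Lemma derivable_pt_lim_Cmod_sqr_curve (g : R -> C) t l :
  is_derive (K := R_AbsRing) (V := C_R_NormedModule) g t l ->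
  derivable_pt_lim (fun s => Cmod (g s) ^ 2) t (2 * Re (Cconj (g t) * l)).
Proof.
  intros H. apply is_derive_Reals.
  apply (is_derive_ext (fun s => Re (g s) * Re (g s) + Im (g s) * Im (g s)));
    [intros s; rewrite Cmod2_alt;
     change (Re (g s) * Re (g s) + Im (g s) * Im (g s) = Re (g s) ^ 2 + Im (g s) ^ 2); ring|].
  assert (D : is_derive (fun s => Re (g s) * Re (g s) + Im (g s) * Im (g s)) t
                (Re l * Re (g t) + Re (g t) * Re l + (Im l * Im (g t) + Im (g t) * Im l))).
  { apply (is_derive_plus (fun s => Re (g s) * Re (g s)) (fun s => Im (g s) * Im (g s)));
      [apply (is_derive_mult (fun s => Re (g s)) (fun s => Re (g s)))
      |apply (is_derive_mult (fun s => Im (g s)) (fun s => Im (g s)))];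
      auto using is_derive_Re_curve, is_derive_Im_curve, Rmult_comm. }
  replace (2 * Re (Cconj (g t) * l)) with
    (Re l * Re (g t) + Re (g t) * Re l + (Im l * Im (g t) + Im (g t) * Im l))
    by (unfold Re, Im, Cconj, Cmult; simpl; ring).
  exact D.
Qed.

Lemma gronwall (V V' : R -> R) k :
  (forall t, 0 <= t <= 1 -> derivable_pt_lim V t (V' t)) ->
  (forall t, 0 <= t <= 1 -> V' t <= k * V t) -> V 1 <= exp k * V 0.
Proof.
  intros HV HV'.
  set (W := fun t => V t * exp (- k * t)).
  set (W' := fun t => V' t * exp (- k * t) + V t * (- k * exp (- k * t))).
  assert (HW : forall t, 0 <= t <= 1 -> derivable_pt_lim W t (W' t)).
  { intros t Ht. apply is_derive_Reals.
    apply (is_derive_mult V (fun t => exp (- k * t))); [apply is_derive_Reals, HV, Ht| |apply Rmult_comm].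
    auto_derive; [exact I|ring]. }
  destruct (MVT_cor2 W W' 0 1 Rlt_0_1 HW) as [c [Hc1 Hc2]].
  assert (W' c <= 0).
  { unfold W'. pose proof (HV' c ltac:(lra)). pose proof (exp_pos (- k * c)). nra. }
  assert (HW1 : W 1 <= W 0) by nra.
  unfold W in HW1. rewrite Rmult_0_r, exp_0, Rmult_1_r, Rmult_1_r in HW1.
  replace (V 1) with (V 1 * exp (- k) * exp k)
    by (rewrite Rmult_assoc, <- exp_plus; replace (- k + k) with 0 by ring; rewrite exp_0; ring).
  pose proof (exp_pos k). nra.
Qed.

Lemma is_derive_one_sub_ray phi z t l : is_Cderive phi (RtoC t * z)%C l ->
  is_derive (K := R_AbsRing) (V := C_R_NormedModule) (fun s : R => 1 - phi (RtoC s * z))%C t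
    (0 - z * l)%C.
Proof.
  intros Hl.
  apply (is_derive_minus (K := R_AbsRing) (V := C_R_NormedModule) (fun _ => RtoC 1)
           (fun s : R => phi (RtoC s * z)%C));
    [exact (is_derive_const (K := R_AbsRing) (V := C_R_NormedModule) (RtoC 1) t)|].
  apply (is_derive_ext (fun s => phi (RtoC 0 + RtoC s * z)%C)); [intros s; f_equal; ring|].
  apply is_derive_line. rewrite Cplus_0_l. exact Hl.
Qed.

Lemma Re_conj_mult_ray_le (g u z : C) r : 0 <= r < 1 -> Cmod z <= r ->
  Cmod u * (1 - r) <= 2 * Cmod g -> 2 * Re (Cconj g * (0 - z * u)) <= 4 / (1 - r) * Cmod g ^ 2.
Proof.
  intros Hr Hz Hu. replace (0 - z * u)%C with (- (z * u))%C by ring.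
  pose proof (re_le_Cmod (Cconj g * - (z * u))). pose proof (Rle_abs (Re (Cconj g * - (z * u)))).
  rewrite Cmod_mult, Cmod_conj, Cmod_opp, Cmod_mult in *.
  pose proof (Cmod_ge_0 g). pose proof (Cmod_ge_0 u). pose proof (Cmod_ge_0 z).
  assert (Hzu : Cmod z * Cmod u <= 2 * Cmod g / (1 - r)).
  { apply (Rmult_le_reg_r (1 - r)); [lra|].
    replace (2 * Cmod g / (1 - r) * (1 - r)) with (2 * Cmod g) by (field; lra).
    assert (0 <= Cmod u * (1 - r)) by nra. nra. }
  apply Rle_trans with (2 * (Cmod g * (2 * Cmod g / (1 - r)))); [|right; field; lra].
  apply Rmult_le_compat_l; [lra|].
  apply Rle_trans with (Cmod g * (Cmod z * Cmod u)); [lra|]. apply Rmult_le_compat_l; lra.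
Qed.

(* Harnack's inequality for the nonnegative harmonic function [Re (1 - phi)],
   obtained by integrating [Cmod_derive_le] along the segment [[0, z]]. *)
Lemma harnack phi r z :
  (forall v, Cmod v < 1 -> ex_Cderive phi v) -> (forall v, Cmod v < 1 -> Cmod (phi v) <= 1) ->
  0 <= r < 1 -> Cmod z <= r ->
  Cmod (1 - phi z) <= exp (2 / (1 - r)) * Cmod (1 - phi (RtoC 0)).
Proof.
  intros Hholo Hbound Hr Hz.
  set (G := fun t : R => (1 - phi (RtoC t * z))%C).
  set (l := fun t : R => C_derive phi (RtoC t * z)%C).
  assert (Htz : forall t, 0 <= t <= 1 -> Cmod (RtoC t * z) <= r).
  { intros t Ht. rewrite Cmod_mult, Cmod_R, Rabs_pos_eq by lra. pose proof (Cmod_ge_0 z). nra. }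
  assert (Hl : forall t, 0 <= t <= 1 -> is_Cderive phi (RtoC t * z)%C (l t)).
  { intros t Ht. apply C_derive_correct; [exact z|]. apply Hholo. pose proof (Htz t Ht). lra. }
  assert (Hgrowth : forall t, 0 <= t <= 1 ->
            2 * Re (Cconj (G t) * (0 - z * l t)) <= 4 / (1 - r) * Cmod (G t) ^ 2).
  { intros t Ht. apply Re_conj_mult_ray_le; auto. pose proof (Htz t Ht).
    eapply Rle_trans; [|apply (Cmod_derive_le phi (RtoC t * z)%C (l t) Hholo Hbound ltac:(lra) (Hl t Ht))].
    apply Rmult_le_compat_l; [apply Cmod_ge_0|lra]. }
  pose proof (gronwall (fun t => Cmod (G t) ^ 2) _ _
    (fun t Ht => derivable_pt_lim_Cmod_sqr_curve G t _ (is_derive_one_sub_ray phi z t _ (Hl t Ht)))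
    Hgrowth) as Hgr.
  unfold G in Hgr.
  replace (RtoC 1 * z)%C with z in Hgr by ring. replace (RtoC 0 * z)%C with (RtoC 0) in Hgr by ring.
  assert (Hk : exp (4 / (1 - r)) = Rsqr (exp (2 / (1 - r))))
    by (unfold Rsqr; rewrite <- exp_plus; f_equal; field; lra).
  apply Rsqr_incr_0_var.
  - rewrite Rsqr_mult, <- Hk. unfold Rsqr. lra.
  - apply Rmult_le_pos; [left; apply exp_pos|apply Cmod_ge_0].
Qed.

(** * Convergence of the products *)

Lemma eventually_lt_of_ex_series (a : nat -> R) eps : ex_series a -> 0 < eps ->
  exists N, forall n, (N <= n)%nat -> Rabs (a n) < eps.
Proof.
  intros H He. apply ex_series_lim_0, is_lim_seq_spec in H.
  destruct (H (mkposreal eps He)) as [N HN]. exists N. intros n Hn.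
  specialize (HN n Hn). simpl in HN. rewrite Rminus_0_r in HN. exact HN.
Qed.

Lemma ex_series_le_eventually (a b : nat -> R) N K :
  (forall n, 0 <= a n) -> (forall n, (N <= n)%nat -> a n <= K * b n) -> ex_series b -> ex_series a.
Proof.
  intros Ha Hab Hb. apply (ex_series_incr_n _ N).
  apply (ex_series_le (K := R_AbsRing) (V := R_CompleteNormedModule) _ (fun k => K * b (N + k)%nat)).
  - intros k. change (Rabs (a (N + k)%nat) <= K * b (N + k)%nat).
    rewrite Rabs_pos_eq by apply Ha. apply Hab. lia.
  - apply (ex_series_scal_l (K := R_AbsRing) (V := R_NormedModule)).
    apply (ex_series_incr_n b N), Hb.
Qed.

Lemma sum_sub_Series (a : nat -> R) N : ex_series a ->
  sum_f_R0 a N - Series a = - Series (fun k => a (S (N + k))).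
Proof. intros H. rewrite (Series_incr_n a (S N)) by (auto; lia). simpl. ring. Qed.

Lemma Series_nonneg (a : nat -> R) : ex_series a -> (forall n, 0 <= a n) -> 0 <= Series a.
Proof.
  intros Hex Ha. replace 0 with (Series (fun n => 0 * a n)) by (rewrite Series_scal_l; ring).
  apply Series_le; [intros n; split; [lra|rewrite Rmult_0_l; apply Ha]|exact Hex].
Qed.

Lemma weierstrass_M_test {A} (b : nat -> A -> R) (M : nat -> R) (P : A -> Prop) N1 :
  (forall n z, 0 <= b n z) -> (forall n z, (N1 <= n)%nat -> P z -> b n z <= M n) -> ex_series M ->
  exists g : A -> R, forall eps, 0 < eps -> exists N0, forall N, (N0 <= N)%nat ->
    forall z, P z -> Rabs (sum_f_R0 (fun n => b n z) N - g z) < eps.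
Proof.
  intros Hb0 HbM HM. exists (fun z => Series (fun n => b n z)). intros eps Heps.
  pose proof (Series_correct M HM) as HS. apply is_series_Reals in HS.
  destruct (HS eps Heps) as [N0 HN0].
  exists (max N0 N1). intros N HN z Hz.
  assert (Hex : ex_series (fun n => b n z)).
  { apply (ex_series_le_eventually _ M N1 1); auto. intros n Hn. rewrite Rmult_1_l. auto. }
  specialize (HN0 N ltac:(lia)). unfold R_dist in HN0.
  rewrite sum_sub_Series in HN0 |- * by assumption. rewrite Rabs_Ropp in HN0 |- *.
  assert (Htail : forall k, 0 <= b (S (N + k)) z <= M (S (N + k))).
  { intros k. split; [apply Hb0|]. apply HbM; [lia|exact Hz]. }
  assert (Hle : Series (fun k => b (S (N + k)) z) <= Series (fun k => M (S (N + k))))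
    by (apply Series_le; [exact Htail|apply (ex_series_incr_n M (S N)), HM]).
  rewrite Rabs_pos_eq
    by (apply Series_nonneg; [exact (proj1 (ex_series_incr_n _ (S N)) Hex)|intros; apply Hb0]).
  eapply Rle_lt_trans; [exact Hle|]. eapply Rle_lt_trans; [apply Rle_abs|exact HN0].
Qed.

Lemma unif_conv_abs_conv_at_0 (w : nat -> C -> C) :
  prod_abs_loc_unif_conv w -> prod_abs_conv (fun n => w n (RtoC 0)).
Proof.
  intros H. destruct (H 0 ltac:(lra)) as [g Hg].
  exists (g (RtoC 0)). apply is_series_Reals. intros eps He.
  destruct (Hg eps He) as [N0 HN0]. exists N0. intros n Hn.
  apply (HN0 n Hn). rewrite Cmod_0. lra.
Qed.

Lemma loc_unif_conv_of_dominated (w : nat -> C -> C) (a : nat -> R) : ex_series a ->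
  (forall r, 0 <= r < 1 -> exists K N, forall n z, (N <= n)%nat -> Cmod z <= r ->
     Cmod (1 - w n z) <= K * a n) ->
  prod_abs_loc_unif_conv w.
Proof.
  intros Ha Hw r Hr. destruct (Hw r Hr) as (K & N & HK).
  apply (weierstrass_M_test (fun n z => Cmod (1 - w n z)) (fun n => K * a n) _ N).
  - intros; apply Cmod_ge_0.
  - exact HK.
  - apply (ex_series_scal_l (K := R_AbsRing) (V := R_NormedModule)), Ha.
Qed.

Lemma Cmod_1_sub_Ci : Cmod (1 - Ci) = sqrt 2.
Proof. unfold Cmod, Ci, Cminus, Cplus, Copp; simpl. f_equal. ring. Qed.

Lemma Cmod_1_add_Ci : Cmod (1 + Ci) = sqrt 2.
Proof. unfold Cmod, Ci, Cplus; simpl. f_equal. ring. Qed.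

Lemma sqrt2_bounds : 1.4 <= sqrt 2 <= 1.5.
Proof. pose proof (sqrt_sqrt 2 ltac:(lra)). pose proof (sqrt_pos 2). split; nra. Qed.

Lemma one_sub_T w : (1 + Ci * w)%C <> RtoC 0 -> (1 - T w)%C = ((1 - Ci) * (1 - w) / (1 + Ci * w))%C.
Proof.
  intros H. unfold T, Cdiv.
  replace (1 - Ci * (1 - Ci * w) * / (1 + Ci * w))%C
    with ((1 + Ci * w - Ci * (1 - Ci * w)) * / (1 + Ci * w))%C by (field; exact H).
  f_equal. replace (1 + Ci * w - Ci * (1 - Ci * w))%C with (1 + Ci * w - Ci + (Ci * Ci) * w)%C by ring.
  rewrite Ci_sqr. ring.
Qed.

(* [T i = 0] is the junk value of the division at the pole [w = i]. *)
Lemma Cmod_one_sub_le_T w : Cmod w <= 1 -> Cmod (1 - w) <= 2 * Cmod (1 - T w).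
Proof.
  intros Hw. pose proof sqrt2_bounds.
  destruct (Ceq_dec (1 + Ci * w)%C (RtoC 0)) as [E|E].
  - assert (Ew : w = Ci).
    { replace w with (- Ci * (1 + Ci * w) + Ci)%C
        by (replace (- Ci * (1 + Ci * w) + Ci)%C with (- (Ci * Ci) * w)%C by ring; rewrite Ci_sqr; ring).
      rewrite E. ring. }
    assert (ET : T w = RtoC 0).
    { unfold T, Cdiv. rewrite E. unfold Cinv, RtoC, Cmult; simpl. f_equal; unfold Rdiv; ring. }
    rewrite ET, Ew, Cmod_1_sub_Ci. replace (1 - RtoC 0)%C with (RtoC 1) by ring. rewrite Cmod_1. lra.
  - rewrite one_sub_T by exact E. unfold Cdiv. rewrite !Cmod_mult, Cmod_inv, Cmod_1_sub_Ci by exact E.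
    assert (Hd : Cmod (1 + Ci * w) <= 2).
    { eapply Rle_trans; [apply Cmod_triangle|]. rewrite Cmod_1, Cmod_mult, Cmod_Ci. lra. }
    assert (0 < Cmod (1 + Ci * w)) by (apply Cmod_gt_0, E).
    pose proof (Cmod_ge_0 (1 - w)).
    assert (/ 2 <= / Cmod (1 + Ci * w)) by (apply Rinv_le_contravar; lra).
    assert (Cmod (1 - w) * / 2 <= Cmod (1 - w) * / Cmod (1 + Ci * w)) by (apply Rmult_le_compat_l; lra).
    nra.
Qed.

Lemma Cmod_one_sub_T_le w : Cmod (1 - w) <= 1 / 2 -> Cmod (1 - T w) <= 2 * Cmod (1 - w).
Proof.
  intros Hw. pose proof sqrt2_bounds.
  assert (Hd : 0.9 <= Cmod (1 + Ci * w)).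
  { pose proof (Cmod_triangle (1 + Ci * w) (Ci * (1 - w))) as Ht.
    rewrite Cmod_mult, Cmod_Ci in Ht.
    replace ((1 + Ci * w) + Ci * (1 - w))%C with (1 + Ci)%C in Ht by ring.
    rewrite Cmod_1_add_Ci in Ht. lra. }
  assert (E : (1 + Ci * w)%C <> RtoC 0) by (intros E; rewrite E, Cmod_0 in Hd; lra).
  rewrite one_sub_T by exact E. unfold Cdiv. rewrite !Cmod_mult, Cmod_inv, Cmod_1_sub_Ci by exact E.
  pose proof (Cmod_ge_0 (1 - w)).
  assert (/ Cmod (1 + Ci * w) <= / 0.9) by (apply Rinv_le_contravar; lra).
  assert (sqrt 2 * Cmod (1 - w) * / Cmod (1 + Ci * w) <= 1.5 * Cmod (1 - w) * / 0.9).
  { apply Rmult_le_compat; [nra|left; apply Rinv_0_lt_compat; lra|nra|lra]. }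
  lra.
Qed.

Section SelfMapsOfTheDisk.

Variable phi : nat -> C -> C.
Hypotheses (Hholo : forall n v, Cmod v < 1 -> ex_Cderive (phi n) v)
           (Hbound : forall n v, Cmod v < 1 -> Cmod (phi n v) <= 1).

Lemma loc_unif_conv_of_abs_conv_at_0 :
  prod_abs_conv (fun n => phi n (RtoC 0)) -> prod_abs_loc_unif_conv phi.
Proof.
  intros Ha. apply (loc_unif_conv_of_dominated _ _ Ha). intros r Hr.
  exists (exp (2 / (1 - r))), 0%nat. intros n z _ Hz. apply harnack; auto.
Qed.

Lemma loc_unif_conv_T_of_abs_conv_at_0 :
  prod_abs_conv (fun n => phi n (RtoC 0)) -> prod_abs_loc_unif_conv (fun n z => T (phi n z)).
Proof.
  intros Ha. apply (loc_unif_conv_of_dominated _ _ Ha). intros r Hr.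
  pose proof (exp_pos (2 / (1 - r))) as HK. set (K := exp (2 / (1 - r))) in *.
  destruct (eventually_lt_of_ex_series _ (1 / (2 * K)) Ha) as [N HN];
    [apply Rdiv_lt_0_compat; lra|].
  exists (2 * K), N. intros n z Hn Hz. specialize (HN n Hn).
  rewrite Rabs_pos_eq in HN by apply Cmod_ge_0.
  pose proof (harnack (phi n) r z (Hholo n) (Hbound n) Hr Hz) as Hz'. fold K in Hz'.
  rewrite Rmult_assoc.
  apply Rle_trans with (2 * Cmod (1 - phi n z)); [apply Cmod_one_sub_T_le|lra].
  apply Rle_trans with (K * (1 / (2 * K))); [|right; field; lra].
  eapply Rle_trans; [eassumption|]. apply Rmult_le_compat_l; lra.
Qed.

End SelfMapsOfTheDisk.

Lemma prod_abs_conv_T (w : nat -> C) : (forall n, Cmod (w n) <= 1) ->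
  prod_abs_conv w <-> prod_abs_conv (fun n => T (w n)).
Proof.
  intros Hw. split.
  - intros Ha. destruct (eventually_lt_of_ex_series _ (1 / 2) Ha) as [N HN]; [lra|].
    apply (ex_series_le_eventually _ (fun n => Cmod (1 - w n)) N 2); [intros; apply Cmod_ge_0| |exact Ha].
    intros n Hn. apply Cmod_one_sub_T_le. specialize (HN n Hn).
    rewrite Rabs_pos_eq in HN by apply Cmod_ge_0. lra.
  - intros Hc. apply (ex_series_le_eventually _ (fun n => Cmod (1 - T (w n))) 0 2);
      [intros; apply Cmod_ge_0| |exact Hc].
    intros n _. apply Cmod_one_sub_le_T, Hw.
Qed.

Theorem lemma4p3 (phi : nat -> C -> C)
  (Hinner : forall n, inner (phi n))
  (Hnz : forall n, phi n 0 <> RtoC 0)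
  (Hnoti : forall n, ~ (forall z, in_disk z -> phi n z = Ci)) :
  let f := fun n z => T (phi n z) in
  (prod_abs_conv (fun n => phi n 0) <-> prod_abs_loc_unif_conv phi) /\
  (prod_abs_loc_unif_conv phi <-> prod_abs_conv (fun n => f n 0)) /\
  (prod_abs_conv (fun n => f n 0) <-> prod_abs_loc_unif_conv f).
Proof.
  intros f. unfold f.
  assert (Hholo : forall n v, Cmod v < 1 -> ex_Cderive (phi n) v) by (intros n; apply (Hinner n)).
  assert (Hbound : forall n v, Cmod v < 1 -> Cmod (phi n v) <= 1) by (intros n; apply (Hinner n)).
  assert (H0 : Cmod (RtoC 0) < 1) by (rewrite Cmod_0; lra).
  pose proof (prod_abs_conv_T (fun n => phi n (RtoC 0)) (fun n => Hbound n _ H0)).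
  pose proof (loc_unif_conv_of_abs_conv_at_0 phi Hholo Hbound).
  pose proof (loc_unif_conv_T_of_abs_conv_at_0 phi Hholo Hbound).
  pose proof (unif_conv_abs_conv_at_0 phi).
  pose proof (unif_conv_abs_conv_at_0 (fun n z => T (phi n z))).
  cbv beta in *. tauto.
Qed.
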